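(* Let $n\ge2$ be an integer and $\alpha=1-\frac1n$. There is a constant $C_n>0$ depending only on $n$ such that for every real $\beta\le0$ and every $y\le-1$, $$C_n^{-1}\frac{e^y(-y)^{\frac{1-2\alpha}{4}}}{\Gamma(\alpha-\beta)}\int_{1/\sqrt{-y}}^\infty e^{G(u)}\,du\le\mathcal{M}(\beta,\alpha,y)\le C_n\frac{e^y(-y)^{\frac{1-2\alpha}{4}}}{\Gamma(\alpha-\beta)}\int_0^\infty e^{G(u)}\,du,$$ where $G(u)=-u^2+2\sqrt{-y}\,u+(\alpha-2\beta-\tfrac12)\log u$.
   Context: $(x)_k=\prod_{m=1}^k(x+m-1)$, $(x)_0=1$, and $\mathcal{M}(\beta,\alpha,y)=\sum_{k\ge0}\frac{(\beta)_k}{(\alpha)_k}\frac{y^k}{k!}$ (Kummer's function). *)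

From Stdlib Require Import Reals.
From Coquelicot Require Import Coquelicot.
Open Scope R_scope.

Fixpoint poch (x : R) (k : nat) : R :=
  match k with
  | O => 1
  | S k' => poch x k' * (x + INR k')
  end.

Definition kummerM (beta alpha y : R) : R :=
  Series (fun k => poch beta k / poch alpha k * (y ^ k / INR (Factorial.fact k))).

Definition Gamma (s : R) : R :=
  RInt_gen (fun t => Rpower t (s - 1) * exp (- t)) (at_right 0) (Rbar_locally p_infty).

Definition Gfun (alpha beta y u : R) : R :=
  - u ^ 2 + 2 * sqrt (- y) * u + (alpha - 2 * beta - 1 / 2) * ln u.

(* Kummer's transformation M(beta, alpha, y) = e^y M(alpha - beta, alpha, -y) reduces
   the claim to the positive argument x = -y. Integrating
   (a)_k Gamma(a) = 2 int_0^oo u^(2a+2k-1) e^(-u^2) du termwise gives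
   Gamma(a) M(a, alpha, x) = 2 int_0^oo u^(2a-1) e^(-u^2) F(x u^2) du with
   F(z) = sum_k z^k / ((alpha)_k k!). As (2k)! = 4^k k! (1/2)_k, the k-th term of F(w^2)
   is the (2k)-th term of e^(2w) times (1/2)_k / (alpha)_k, and for 1/2 <= alpha <= 1
   this ratio is comparable to (k+1)^(1/2 - alpha); hence F(w^2) is comparable to
   (2w)^(1/2 - alpha) e^(2w), from below only when w >= 1. With w = sqrt(x) u the
   integrand becomes a constant times x^((1 - 2 alpha)/4) e^(G(u)). *)

From Stdlib Require Import Reals Factorial Lra Lia Psatz Classical.
From Coquelicot Require Import Coquelicot.
Open Scope R_scope.

(** * Pochhammer symbols and Kummer's transformation *)

Lemma poch_pos x k : 0 < x -> 0 < poch x k.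
Proof.
  intros hx; induction k as [|k IH]; simpl; [lra|].
  apply Rmult_lt_0_compat; [exact IH|]. pose proof (pos_INR k); lra.
Qed.

Lemma poch_S_shift x k : poch x (S k) = x * poch (x + 1) k.
Proof.
  induction k as [|k IH]; [simpl; ring|].
  change (poch x (S (S k))) with (poch x (S k) * (x + INR (S k))).
  rewrite IH, S_INR. simpl. ring.
Qed.

Lemma poch_ge_pow b k : 0 < b -> b ^ k <= poch b k.
Proof.
  intros hb; induction k as [|k IH]; simpl; [lra|].
  pose proof (pos_INR k). rewrite Rmult_comm.
  apply Rmult_le_compat; try lra. apply pow_le; lra.
Qed.

Lemma poch_ratio_le_pow a b k : 0 < a -> 0 < b ->
  poch a k / poch b k <= Rmax 1 (a / b) ^ k.
Proof.
  intros ha hb; induction k as [|k IH]; simpl; [lra|].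
  pose proof (poch_pos a k ha). pose proof (poch_pos b k hb). pose proof (pos_INR k).
  assert (step : (a + INR k) / (b + INR k) <= Rmax 1 (a / b)).
  { destruct (Rle_dec a b).
    - apply Rle_trans with 1; [|apply Rmax_l].
      apply Rmult_le_reg_r with (b + INR k); [lra|]. field_simplify; lra.
    - apply Rle_trans with (a / b); [|apply Rmax_r].
      apply Rmult_le_reg_r with ((b + INR k) * b); [nra|].
      field_simplify; [nra|lra|lra]. }
  replace (poch a k * (a + INR k) / (poch b k * (b + INR k)))
    with (poch a k / poch b k * ((a + INR k) / (b + INR k))) by (field; lra).
  rewrite Rmult_comm.
  apply Rmult_le_compat; auto; apply Rle_mult_inv_pos; lra.
Qed.

Lemma sum_binomial_S (t : nat -> R) n :
  sum_f_R0 (fun k => Binomial.C (S n) k * t k) (S n) =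
  sum_f_R0 (fun k => Binomial.C n k * t k) n +
  sum_f_R0 (fun k => Binomial.C n k * t (S k)) n.
Proof.
  destruct n as [|m].
  - simpl. rewrite !C_n_0. replace (Binomial.C 1 1) with 1 by (symmetry; apply C_n_n). ring.
  - rewrite (decomp_sum (fun k => Binomial.C (S (S m)) k * t k) (S (S m))) by lia.
    rewrite (decomp_sum (fun k => Binomial.C (S m) k * t k) (S m)) by lia.
    change (pred (S (S m))) with (S m). change (pred (S m)) with m.
    rewrite (tech5 (fun i => Binomial.C (S (S m)) (S i) * t (S i))).
    rewrite (tech5 (fun k => Binomial.C (S m) k * t (S k))).
    rewrite !C_n_0, !C_n_n.
    rewrite (sum_eq (fun i => Binomial.C (S (S m)) (S i) * t (S i))
      (fun i => Binomial.C (S m) i * t (S i) + Binomial.C (S m) (S i) * t (S i)))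
      by (intros i hi; rewrite <- pascal by lia; ring).
    rewrite plus_sum. ring.
Qed.

Lemma chu_vandermonde n : forall a b, 0 < b ->
  sum_f_R0 (fun k => Binomial.C n k * ((-1) ^ k * (poch a k / poch b k))) n =
  poch (b - a) n / poch b n.
Proof.
  induction n as [|n IH]; intros a b hb.
  - simpl. rewrite C_n_0. field.
  - rewrite sum_binomial_S.
    rewrite (sum_eq (fun k => Binomial.C n k * ((-1) ^ S k * (poch a (S k) / poch b (S k))))
      (fun k => Binomial.C n k * ((-1) ^ k * (poch (a + 1) k / poch (b + 1) k)) * (- (a / b)))).
    2:{ intros k _. rewrite !poch_S_shift. pose proof (poch_pos (b + 1) k ltac:(lra)).
        simpl pow. field. lra. }
    rewrite <- scal_sum, !IH by lra.
    replace (b + 1 - (a + 1)) with (b - a) by ring.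
    pose proof (poch_pos b n hb). pose proof (poch_pos (b + 1) n ltac:(lra)).
    pose proof (pos_INR n).
    assert (Hb1 : poch (b + 1) n = poch b n * (b + INR n) / b).
    { apply (Rmult_eq_reg_l b); [|lra].
      rewrite <- poch_S_shift. simpl. field. lra. }
    rewrite Hb1. simpl. field. repeat split; lra.
Qed.

Definition kummer_term (a b x : R) (k : nat) : R :=
  poch a k / poch b k * (x ^ k / INR (fact k)).

Lemma is_series_exp x : is_series (fun k => x ^ k / INR (fact k)) (exp x).
Proof.
  eapply is_series_ext; [|apply (is_exp_Reals x)].
  intros k. rewrite pow_n_pow. unfold scal; simpl; unfold mult; simpl.
  rewrite <- pow_n_pow. reflexivity.
Qed.

Lemma ex_series_abs_kummer_term a b x : 0 < a -> 0 < b ->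
  ex_series (fun k => Rabs (kummer_term a b x k)).
Proof.
  intros ha hb.
  apply (@ex_series_le R_AbsRing R_CompleteNormedModule)
    with (fun k => (Rmax 1 (a / b) * Rabs x) ^ k / INR (fact k)).
  2:{ eexists; apply is_series_exp. }
  intros k. unfold norm; simpl; unfold abs; simpl. rewrite Rabs_Rabsolu.
  unfold kummer_term. pose proof (poch_pos a k ha). pose proof (poch_pos b k hb).
  pose proof (INR_fact_lt_0 k).
  rewrite Rabs_mult, !Rabs_div, <- RPow_abs by lra.
  rewrite (Rabs_right (poch a k)), (Rabs_right (poch b k)), (Rabs_right (INR (fact k))) by lra.
  rewrite Rpow_mult_distr. unfold Rdiv. rewrite <- Rmult_assoc.
  apply Rmult_le_compat_r; [left; apply Rinv_0_lt_compat; lra|].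
  apply Rmult_le_compat_r; [apply pow_le, Rabs_pos|].
  apply poch_ratio_le_pow; assumption.
Qed.

Lemma kummer_term_cauchy_product a b y n : 0 < b ->
  sum_f_R0 (fun k => kummer_term a b (- y) k * (y ^ (n - k) / INR (fact (n - k)))) n
  = kummer_term (b - a) b y n.
Proof.
  intros hb. unfold kummer_term. rewrite <- chu_vandermonde by exact hb.
  rewrite Rmult_comm, scal_sum. apply sum_eq. intros k hk.
  pose proof (INR_fact_lt_0 k). pose proof (INR_fact_lt_0 (n - k)).
  pose proof (INR_fact_lt_0 n). pose proof (poch_pos b k hb).
  replace (- y) with (-1 * y) by ring. rewrite Rpow_mult_distr.
  replace (y ^ n) with (y ^ k * y ^ (n - k)) by (rewrite <- pow_add; f_equal; lia).
  unfold Binomial.C. field. repeat split; lra.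
Qed.

Lemma kummerM_transform a b y : 0 < a -> 0 < b ->
  kummerM (b - a) b y = exp y * kummerM a b (- y).
Proof.
  intros ha hb. apply is_series_unique. rewrite Rmult_comm.
  eapply is_series_ext; [intros n; apply (kummer_term_cauchy_product a b y n hb)|].
  apply (is_series_mult (kummer_term a b (- y)) (fun k => y ^ k / INR (fact k))).
  - apply Series_correct, ex_series_Rabs, ex_series_abs_kummer_term; assumption.
  - apply is_series_exp.
  - apply ex_series_abs_kummer_term; assumption.
  - exists (exp (Rabs y)). eapply is_series_ext; [|apply is_series_exp].
    intros k. pose proof (INR_fact_lt_0 k).
    rewrite Rabs_div, <- RPow_abs, (Rabs_right (INR (fact k))) by lra. reflexivity.
Qed.

(** * Improper integrals of nonnegative functions *)

(* Coquelicot cannot infer the module structure of [R] in these lemmas. *)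
Lemma ex_RInt_Chasles_1_R (f : R -> R) a b c :
  a <= b <= c -> ex_RInt f a c -> ex_RInt f a b.
Proof. apply (@ex_RInt_Chasles_1 R_CompleteNormedModule). Qed.

Lemma ex_RInt_Chasles_2_R (f : R -> R) a b c :
  a <= b <= c -> ex_RInt f a c -> ex_RInt f b c.
Proof. apply (@ex_RInt_Chasles_2 R_CompleteNormedModule). Qed.

Lemma RInt_Chasles_R (f : R -> R) a b c :
  ex_RInt f a b -> ex_RInt f b c -> RInt f a b + RInt f b c = RInt f a c.
Proof. apply (@RInt_Chasles R_CompleteNormedModule). Qed.

Lemma ex_RInt_scal_R (f : R -> R) c a b :
  ex_RInt f a b -> ex_RInt (fun x => c * f x) a b.
Proof. intros H. exact (@ex_RInt_scal R_NormedModule f a b c H). Qed.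

Lemma RInt_scal_R (f : R -> R) c a b :
  ex_RInt f a b -> RInt (fun x => c * f x) a b = c * RInt f a b.
Proof. intros H. exact (@RInt_scal R_CompleteNormedModule f a b c H). Qed.

Lemma ex_RInt_plus_R (f g : R -> R) a b :
  ex_RInt f a b -> ex_RInt g a b -> ex_RInt (fun x => f x + g x) a b.
Proof. apply (@ex_RInt_plus R_NormedModule). Qed.

Lemma RInt_plus_R (f g : R -> R) a b : ex_RInt f a b -> ex_RInt g a b ->
  RInt (fun x => f x + g x) a b = RInt f a b + RInt g a b.
Proof. apply (@RInt_plus R_CompleteNormedModule). Qed.

Lemma ex_RInt_const_R (c a b : R) : ex_RInt (fun _ => c) a b.
Proof. apply (@ex_RInt_const R_NormedModule). Qed.

Lemma RInt_const_R (c a b : R) : RInt (fun _ => c) a b = (b - a) * c.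
Proof. apply (@RInt_const R_CompleteNormedModule). Qed.

Lemma RInt_ext_R (f g : R -> R) a b :
  (forall x, Rmin a b < x < Rmax a b -> f x = g x) -> RInt f a b = RInt g a b.
Proof. apply (@RInt_ext R_CompleteNormedModule). Qed.

Lemma ex_RInt_continuous_R (f : R -> R) a b : a <= b ->
  (forall x, a <= x <= b -> continuous f x) -> ex_RInt f a b.
Proof.
  intros hab Hf. apply (@ex_RInt_continuous R_CompleteNormedModule).
  rewrite Rmin_left, Rmax_right by lra. exact Hf.
Qed.

Lemma continuous_of_ex_derive (f : R -> R) x : ex_derive f x -> continuous f x.
Proof. apply (@ex_derive_continuous R_AbsRing R_NormedModule). Qed.

Lemma RInt_le_of_subinterval f A' A B B' :
  (forall u, A' < u < B' -> 0 <= f u) -> ex_RInt f A' B' ->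
  A' <= A -> A <= B -> B <= B' -> RInt f A B <= RInt f A' B'.
Proof.
  intros Hpos Hex h1 h2 h3.
  assert (E1 : ex_RInt f A' A) by (apply ex_RInt_Chasles_1_R with B'; [lra|exact Hex]).
  assert (E2 : ex_RInt f A B') by (apply ex_RInt_Chasles_2_R with A'; [lra|exact Hex]).
  assert (E3 : ex_RInt f A B) by (apply ex_RInt_Chasles_1_R with B'; [lra|exact E2]).
  assert (E4 : ex_RInt f B B') by (apply ex_RInt_Chasles_2_R with A; [lra|exact E2]).
  rewrite <- (RInt_Chasles_R f A' A B'), <- (RInt_Chasles_R f A B B') by assumption.
  assert (0 <= RInt f A' A) by (apply RInt_ge_0; auto; intros; apply Hpos; lra).
  assert (0 <= RInt f B B') by (apply RInt_ge_0; auto; intros; apply Hpos; lra).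
  lra.
Qed.

Lemma sup_approx (E : R -> Prop) : bound E -> (exists v, E v) ->
  exists m, (forall v, E v -> v <= m) /\
            (forall eps, 0 < eps -> exists v, E v /\ m - eps < v).
Proof.
  intros HbE HnE. destruct (completeness E HbE HnE) as [m [Hub Hlub]].
  exists m. split; [exact Hub|].
  intros eps heps. apply NNPP. intros Hn.
  assert (m <= m - eps); [|lra].
  apply Hlub. intros v Ev. apply Rnot_lt_le. intros Hlt. apply Hn. exists v. auto.
Qed.

(* For nonnegative [f]: [l] is the supremum of the integrals of [f] over the
   compact subintervals of (0, +oo), resp. over the intervals [p, B]. *)
Definition is_RInt_0_oo (f : R -> R) (l : R) : Prop :=
  (forall A B, 0 < A -> A <= B -> ex_RInt f A B) /\
  (forall u, 0 < u -> 0 <= f u) /\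
  (forall A B, 0 < A -> A <= B -> RInt f A B <= l) /\
  (forall eps, 0 < eps -> exists A B, 0 < A /\ A <= B /\ l - eps < RInt f A B).

Definition is_RInt_p_oo (p : R) (f : R -> R) (l : R) : Prop :=
  (forall B, p <= B -> ex_RInt f p B) /\
  (forall u, p < u -> 0 <= f u) /\
  (forall B, p <= B -> RInt f p B <= l) /\
  (forall eps, 0 < eps -> exists B, p <= B /\ l - eps < RInt f p B).

Lemma is_RInt_0_oo_exists f M :
  (forall A B, 0 < A -> A <= B -> ex_RInt f A B) ->
  (forall u, 0 < u -> 0 <= f u) ->
  (forall A B, 0 < A -> A <= B -> RInt f A B <= M) ->
  exists l, is_RInt_0_oo f l.
Proof.
  intros Hex Hpos Hb.
  destruct (sup_approx (fun v => exists A B, 0 < A /\ A <= B /\ v = RInt f A B))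
    as [l [Hub Happ]].
  - exists M. intros v [A [B [hA [hAB ->]]]]. auto.
  - exists (RInt f 1 1), 1, 1. repeat split; lra.
  - exists l. repeat split; auto.
    + intros A B hA hAB. apply Hub. exists A, B. auto.
    + intros eps heps. destruct (Happ eps heps) as [v [[A [B [hA [hAB ->]]]] hv]].
      exists A, B. auto.
Qed.

Lemma is_RInt_p_oo_exists p f M :
  (forall B, p <= B -> ex_RInt f p B) ->
  (forall u, p < u -> 0 <= f u) ->
  (forall B, p <= B -> RInt f p B <= M) ->
  exists l, is_RInt_p_oo p f l.
Proof.
  intros Hex Hpos Hb.
  destruct (sup_approx (fun v => exists B, p <= B /\ v = RInt f p B)) as [l [Hub Happ]].
  - exists M. intros v [B [hB ->]]. auto.
  - exists (RInt f p p), p. split; lra.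
  - exists l. repeat split; auto.
    + intros B hB. apply Hub. exists B. auto.
    + intros eps heps. destruct (Happ eps heps) as [v [[B [hB ->]] hv]]. exists B. auto.
Qed.

Lemma is_RInt_0_oo_ge0 f l : is_RInt_0_oo f l -> 0 <= l.
Proof.
  intros [_ [_ [Hub _]]]. apply Rle_trans with (RInt f 1 1); [|apply Hub; lra].
  rewrite RInt_point. unfold zero; simpl; lra.
Qed.

Lemma is_RInt_p_oo_ge0 p f l : is_RInt_p_oo p f l -> 0 <= l.
Proof.
  intros [_ [_ [Hub _]]]. apply Rle_trans with (RInt f p p); [|apply Hub; lra].
  rewrite RInt_point. unfold zero; simpl; lra.
Qed.

Lemma is_RInt_0_oo_near f l : is_RInt_0_oo f l ->
  forall eps, 0 < eps -> exists A0 B0, 0 < A0 /\ A0 <= B0 /\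
    forall A B, 0 < A -> A <= A0 -> B0 <= B -> l - eps < RInt f A B.
Proof.
  intros [Hex [Hpos [_ Happ]]] eps heps.
  destruct (Happ eps heps) as [A0 [B0 [hA0 [hAB0 hl]]]].
  exists A0, B0. repeat split; auto. intros A B hA hAA0 hB.
  eapply Rlt_le_trans; [apply hl|].
  apply RInt_le_of_subinterval; try lra.
  - intros; apply Hpos; lra.
  - apply Hex; lra.
Qed.

Lemma RInt_gen_0_oo f l : is_RInt_0_oo f l ->
  RInt_gen f (at_right 0) (Rbar_locally p_infty) = l.
Proof.
  intros H. apply (@is_RInt_gen_unique R_CompleteNormedModule).
  { apply Proper_StrongProper, at_right_proper_filter. }
  { apply Proper_StrongProper, Rbar_locally_filter. }
  pose proof (is_RInt_0_oo_near f l H) as Hnear.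
  destruct H as [Hex [_ [Hub _]]].
  intros P [eps HP].
  destruct (Hnear eps (cond_pos eps)) as [A0 [B0 [hA0 [hAB0 hl]]]].
  apply Filter_prod with (fun A => 0 < A < A0) (fun B => B0 < B).
  - exists (mkposreal A0 hA0). intros u Hu hu. split; [exact hu|].
    unfold ball in Hu; simpl in Hu; unfold AbsRing_ball, abs, minus, plus, opp in Hu; simpl in Hu.
    rewrite Ropp_0, Rplus_0_r, Rabs_right in Hu by lra. exact Hu.
  - exists B0. auto.
  - intros A B [hA hAA0] hB. exists (RInt f A B). split.
    + apply (@RInt_correct R_CompleteNormedModule), Hex; lra.
    + apply HP. unfold ball; simpl; unfold AbsRing_ball, abs, minus, plus, opp; simpl.
      assert (RInt f A B <= l) by (apply Hub; lra).
      assert (l - eps < RInt f A B) by (apply hl; lra).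
      rewrite Rabs_left1 by lra. lra.
Qed.

Lemma RInt_gen_p_oo p f l : is_RInt_p_oo p f l ->
  RInt_gen f (at_point p) (Rbar_locally p_infty) = l.
Proof.
  intros [Hex [Hpos [Hub Happ]]]. apply (@is_RInt_gen_unique R_CompleteNormedModule).
  { apply Proper_StrongProper, at_point_filter. }
  { apply Proper_StrongProper, Rbar_locally_filter. }
  intros P [eps HP].
  destruct (Happ eps (cond_pos eps)) as [B0 [hB0 hl]].
  apply Filter_prod with (fun A => A = p) (fun B => B0 < B).
  - reflexivity.
  - exists B0. auto.
  - intros A B -> hB. exists (RInt f p B). split.
    + apply (@RInt_correct R_CompleteNormedModule), Hex; lra.
    + apply HP. unfold ball; simpl; unfold AbsRing_ball, abs, minus, plus, opp; simpl.
      assert (RInt f p B <= l) by (apply Hub; lra).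
      assert (RInt f p B0 <= RInt f p B).
      { apply RInt_le_of_subinterval; try lra.
        - intros; apply Hpos; lra.
        - apply Hex; lra. }
      rewrite Rabs_left1 by lra. lra.
Qed.

Lemma is_RInt_0_oo_le f g l m c : 0 <= c ->
  is_RInt_0_oo f l -> is_RInt_0_oo g m -> (forall u, 0 < u -> f u <= c * g u) ->
  l <= c * m.
Proof.
  intros hc [Hexf [_ [_ Happ]]] [Hexg [_ [Hubg _]]] Hle.
  apply Rnot_lt_le. intros Hlt.
  destruct (Happ (l - c * m) ltac:(lra)) as [A [B [hA [hAB hl]]]].
  assert (RInt f A B <= c * RInt g A B).
  { rewrite <- RInt_scal_R by auto.
    apply RInt_le; auto; [apply ex_RInt_scal_R; auto|].
    intros; apply Hle; lra. }
  assert (c * RInt g A B <= c * m) by (apply Rmult_le_compat_l; auto).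
  lra.
Qed.

Lemma is_RInt_p_oo_le_0_oo p f g l m c : 0 < p -> 0 <= c ->
  is_RInt_p_oo p f l -> is_RInt_0_oo g m -> (forall u, p < u -> f u <= c * g u) ->
  l <= c * m.
Proof.
  intros hp hc [Hexf [_ [_ Happ]]] [Hexg [_ [Hubg _]]] Hle.
  apply Rnot_lt_le. intros Hlt.
  destruct (Happ (l - c * m) ltac:(lra)) as [B [hB hl]].
  assert (RInt f p B <= c * RInt g p B).
  { rewrite <- RInt_scal_R by (apply Hexg; lra).
    apply RInt_le; auto; [apply ex_RInt_scal_R, Hexg; lra|].
    intros; apply Hle; lra. }
  assert (c * RInt g p B <= c * m) by (apply Rmult_le_compat_l; auto; apply Hubg; lra).
  lra.
Qed.

Lemma is_RInt_0_oo_ext f g l :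
  (forall u, 0 < u -> f u = g u) -> is_RInt_0_oo f l -> is_RInt_0_oo g l.
Proof.
  intros Hfg [Hex [Hpos [Hub Happ]]].
  assert (Hint : forall A B, 0 < A -> A <= B -> RInt f A B = RInt g A B).
  { intros A B hA hAB. apply RInt_ext_R. rewrite Rmin_left, Rmax_right by lra.
    intros x hx. apply Hfg; lra. }
  repeat split.
  - intros A B hA hAB. apply (@ex_RInt_ext R_NormedModule) with f; [|auto].
    rewrite Rmin_left, Rmax_right by lra. intros x hx. apply Hfg; lra.
  - intros u hu. rewrite <- Hfg; auto.
  - intros A B hA hAB. rewrite <- Hint; auto.
  - intros eps heps. destruct (Happ eps heps) as [A [B [hA [hAB hl]]]].
    exists A, B. rewrite <- Hint; auto.
Qed.

Lemma is_RInt_0_oo_scal c f l : 0 <= c ->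
  is_RInt_0_oo f l -> is_RInt_0_oo (fun u => c * f u) (c * l).
Proof.
  intros hc [Hex [Hpos [Hub Happ]]]. repeat split.
  - intros; apply ex_RInt_scal_R; auto.
  - intros u hu. apply Rmult_le_pos; auto.
  - intros A B hA hAB. rewrite RInt_scal_R by auto. apply Rmult_le_compat_l; auto.
  - intros eps heps. destruct (Req_dec c 0) as [->|hc0].
    + exists 1, 1. rewrite RInt_point. unfold zero; simpl. lra.
    + destruct (Happ (eps / c)) as [A [B [hA [hAB hl]]]]; [apply Rdiv_lt_0_compat; lra|].
      exists A, B. rewrite RInt_scal_R by auto. repeat split; auto.
      apply Rmult_lt_compat_l with (r := c) in hl; [|lra].
      replace (c * (l - eps / c)) with (c * l - eps) in hl by (field; lra). lra.
Qed.

Lemma sum_f_R0_le_is_series (a : nat -> R) l N :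
  is_series a l -> (forall k, 0 <= a k) -> sum_f_R0 a N <= l.
Proof. intros H Hpos. apply is_series_Reals in H. apply sum_incr; auto. Qed.

Lemma is_series_sum_f_R0_near (a : nat -> R) l : is_series a l ->
  forall eps, 0 < eps -> exists N, forall n, (N <= n)%nat -> Rabs (sum_f_R0 a n - l) < eps.
Proof.
  intros H eps heps. apply is_series_Reals in H. destruct (H eps heps) as [N HN].
  exists N. intros n hn. apply HN. lia.
Qed.

Lemma is_series_le_of_sum_le (a : nat -> R) l M :
  is_series a l -> (forall N, sum_f_R0 a N <= M) -> l <= M.
Proof.
  intros H HM. apply Rnot_lt_le. intros Hlt.
  destruct (is_series_sum_f_R0_near a l H (l - M)) as [N HN]; [lra|].
  pose proof (HN N (le_n N)) as HlN. rewrite Rabs_lt_between in HlN. pose proof (HM N). lra.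
Qed.

Lemma RInt_sum_f_R0 (g : nat -> R -> R) A B N : (forall k, ex_RInt (g k) A B) ->
  ex_RInt (fun u => sum_f_R0 (fun k => g k u) N) A B /\
  RInt (fun u => sum_f_R0 (fun k => g k u) N) A B = sum_f_R0 (fun k => RInt (g k) A B) N.
Proof.
  intros Hg. induction N as [|N [IHex IHeq]]; simpl.
  - split; [exact (Hg 0%nat)|reflexivity].
  - split; [apply ex_RInt_plus_R; auto|].
    rewrite RInt_plus_R, IHeq; auto.
Qed.

Lemma RInt_le_of_uniform_approx (K : R -> R) (h : nat -> R -> R) A B L : A <= B ->
  ex_RInt K A B -> (forall N, ex_RInt (h N) A B) -> (forall N, RInt (h N) A B <= L) ->
  (forall eps, 0 < eps -> exists N, forall u, A <= u <= B -> K u - h N u <= eps) ->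
  RInt K A B <= L.
Proof.
  intros hAB HexK Hexh HhL Happ. apply Rnot_lt_le. intros Hlt.
  set (d := RInt K A B - L).
  destruct (Happ (d / (B - A + 1))) as [N HN]; [apply Rdiv_lt_0_compat; unfold d; lra|].
  assert (HK : RInt K A B <= RInt (fun u => h N u + d / (B - A + 1)) A B).
  { apply RInt_le; auto; [apply ex_RInt_plus_R; auto; apply ex_RInt_const_R|].
    intros u hu. pose proof (HN u ltac:(lra)). lra. }
  rewrite RInt_plus_R, RInt_const_R in HK by (auto; apply ex_RInt_const_R).
  assert ((B - A) * (d / (B - A + 1)) < d).
  { apply Rmult_lt_reg_r with (B - A + 1); [lra|].
    replace ((B - A) * (d / (B - A + 1)) * (B - A + 1)) with ((B - A) * d) by (field; lra).
    unfold d. nra. }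
  pose proof (HhL N). unfold d in *. lra.
Qed.

Lemma is_RInt_0_oo_sum_near (g : nat -> R -> R) (l : nat -> R) :
  (forall k, is_RInt_0_oo (g k) (l k)) ->
  forall N eps, 0 < eps -> exists A0 B0, 0 < A0 /\ A0 <= B0 /\
    forall A B, 0 < A -> A <= A0 -> B0 <= B ->
      sum_f_R0 l N - eps < sum_f_R0 (fun k => RInt (g k) A B) N.
Proof.
  intros Hg N. induction N as [|N IH]; intros eps heps; [apply is_RInt_0_oo_near; auto|].
  destruct (IH (eps / 2)) as [A1 [B1 [hA1 [hAB1 H1]]]]; [lra|].
  destruct (is_RInt_0_oo_near _ _ (Hg (S N)) (eps / 2)) as [A2 [B2 [hA2 [hAB2 H2]]]]; [lra|].
  exists (Rmin A1 A2), (Rmax B1 B2).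
  pose proof (Rmin_l A1 A2). pose proof (Rmin_r A1 A2).
  pose proof (Rmax_l B1 B2). pose proof (Rmax_r B1 B2).
  split; [apply Rmin_glb_lt; auto|split; [lra|]].
  intros A B hA hAA0 hB. simpl.
  pose proof (H1 A B hA ltac:(lra) ltac:(lra)). pose proof (H2 A B hA ltac:(lra) ltac:(lra)).
  lra.
Qed.

Lemma is_RInt_0_oo_series (g : nat -> R -> R) (K : R -> R) (l : nat -> R) (L : R) :
  (forall k, is_RInt_0_oo (g k) (l k)) ->
  (forall u, 0 < u -> is_series (fun k => g k u) (K u)) ->
  is_series l L ->
  (forall A B, 0 < A -> A <= B -> ex_RInt K A B) ->
  (forall A B, 0 < A -> A <= B -> forall eps, 0 < eps -> exists N,
      forall u, A <= u <= B -> K u - sum_f_R0 (fun k => g k u) N <= eps) ->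
  is_RInt_0_oo K L.
Proof.
  intros Hg HK HL Hex Hunif.
  assert (Hgpos : forall k u, 0 < u -> 0 <= g k u) by (intros k; apply (Hg k)).
  assert (Hlpos : forall k, 0 <= l k) by (intros k; apply (is_RInt_0_oo_ge0 _ _ (Hg k))).
  assert (Hgex : forall k A B, 0 < A -> A <= B -> ex_RInt (g k) A B) by (intros k; apply (Hg k)).
  assert (Hpartial : forall u N, 0 < u -> sum_f_R0 (fun k => g k u) N <= K u)
    by (intros u N hu; apply sum_f_R0_le_is_series; auto).
  repeat split; auto.
  - intros u hu. apply Rle_trans with (g 0%nat u); [auto|apply (Hpartial u 0%nat hu)].
  - intros A B hA hAB.
    apply (RInt_le_of_uniform_approx K (fun N u => sum_f_R0 (fun k => g k u) N)); auto.
    + intros N. apply RInt_sum_f_R0. intros k. auto.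
    + intros N. rewrite (proj2 (RInt_sum_f_R0 g A B N (fun k => Hgex k A B hA hAB))).
      apply Rle_trans with (sum_f_R0 l N); [|apply sum_f_R0_le_is_series; auto].
      apply sum_Rle. intros k _. apply (Hg k); auto.
  - intros eps heps.
    destruct (is_series_sum_f_R0_near l L HL (eps / 2)) as [N HN]; [lra|].
    pose proof (HN N (le_n N)) as HlN. rewrite Rabs_lt_between in HlN.
    destruct (is_RInt_0_oo_sum_near g l Hg N (eps / 2)) as [A0 [B0 [hA0 [hAB0 Hnear]]]]; [lra|].
    exists A0, B0. repeat split; auto.
    destruct (RInt_sum_f_R0 g A0 B0 N) as [Hsex Hseq]; [intros k; apply Hgex; auto|].
    assert (RInt (fun u => sum_f_R0 (fun k => g k u) N) A0 B0 <= RInt K A0 B0).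
    { apply RInt_le; auto. intros u hu. apply Hpartial. lra. }
    pose proof (Hnear A0 B0 hA0 (Rle_refl _) (Rle_refl _)). lra.
Qed.

(** * Gaussian moments and the Gamma function *)

Lemma exp_le x y : x <= y -> exp x <= exp y.
Proof. intros [H | ->]; [left; apply exp_increasing; exact H|lra]. Qed.

Lemma Rpower_pos x p : 0 < Rpower x p.
Proof. apply exp_pos. Qed.

Lemma Rpower_le_1 u p : 0 < u -> u <= 1 -> 0 <= p -> Rpower u p <= 1.
Proof.
  intros hu hu1 hp. unfold Rpower. rewrite <- exp_0. apply exp_le.
  assert (ln u <= 0) by (rewrite <- ln_1; apply ln_le; lra). nra.
Qed.

Definition gauss_pow (p u : R) : R := Rpower u p * exp (- u ^ 2).

Lemma gauss_pow_ge0 p u : 0 <= gauss_pow p u.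
Proof. apply Rmult_le_pos; left; apply exp_pos. Qed.

Lemma continuous_gauss_pow p x : 0 < x -> continuous (gauss_pow p) x.
Proof. intros hx. apply continuous_of_ex_derive. unfold gauss_pow, Rpower. auto_derive. lra. Qed.

Lemma ex_RInt_gauss_pow p A B : 0 < A -> A <= B -> ex_RInt (gauss_pow p) A B.
Proof.
  intros hA hAB. apply ex_RInt_continuous_R; auto.
  intros x hx. apply continuous_gauss_pow. lra.
Qed.

Lemma RInt_gauss_pow_add2 p A B : 0 < A -> A <= B ->
  RInt (gauss_pow (p + 2)) A B =
  (p + 1) / 2 * RInt (gauss_pow p) A B + (gauss_pow (p + 1) A - gauss_pow (p + 1) B) / 2.
Proof.
  intros hA hAB.
  assert (H : is_RInt (fun t => gauss_pow (p + 2) t - (p + 1) / 2 * gauss_pow p t) A B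
                (minus (- gauss_pow (p + 1) B / 2) (- gauss_pow (p + 1) A / 2))).
  { apply (@is_RInt_derive R_CompleteNormedModule (fun t => - gauss_pow (p + 1) t / 2)).
    - intros x hx. rewrite Rmin_left, Rmax_right in hx by lra.
      unfold gauss_pow, Rpower. auto_derive; [lra|].
      replace ((p + 2) * ln x) with (p * ln x + ln x + ln x) by ring.
      replace ((p + 1) * ln x) with (p * ln x + ln x) by ring.
      rewrite !exp_plus, exp_ln by lra. replace (x * (x * 1)) with (x ^ 2) by ring.
      field. lra.
    - intros x hx. rewrite Rmin_left, Rmax_right in hx by lra.
      apply continuous_of_ex_derive. unfold gauss_pow, Rpower. auto_derive. lra. }
  apply (@is_RInt_unique R_CompleteNormedModule) in H.
  rewrite (@RInt_minus R_CompleteNormedModule), RInt_scal_R in H;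
    [|apply ex_RInt_gauss_pow; auto|apply ex_RInt_gauss_pow; auto
     |apply ex_RInt_scal_R, ex_RInt_gauss_pow; auto].
  unfold minus, plus, opp in H; simpl in H. lra.
Qed.

Lemma gauss_pow_le_exp_neg p u : 0 <= p <= 2 -> 0 < u ->
  gauss_pow p u <= 2 * exp (1 / 2) * exp (- u).
Proof.
  intros hp hu. unfold gauss_pow.
  assert (Hpow : Rpower u p <= 1 + u ^ 2).
  { destruct (Rle_dec u 1).
    - pose proof (Rpower_le_1 u p hu r ltac:(lra)). nra.
    - apply Rle_trans with (Rpower u 2); [apply Rle_Rpower; lra|].
      replace 2 with (INR 2) by (simpl; ring). rewrite Rpower_pow by lra. simpl; nra. }
  assert (Hsplit : exp (- u ^ 2) = exp (- u ^ 2 / 2) * exp (- u ^ 2 / 2))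
    by (rewrite <- exp_plus; f_equal; field).
  assert (Hpoly : (1 + u ^ 2) * exp (- u ^ 2 / 2) <= 2).
  { pose proof (exp_ineq1_le (u ^ 2 / 2)).
    assert (exp (u ^ 2 / 2) * exp (- u ^ 2 / 2) = 1)
      by (rewrite <- exp_plus, <- exp_0; f_equal; field).
    pose proof (exp_pos (- u ^ 2 / 2)). nra. }
  assert (Hgauss : exp (- u ^ 2 / 2) <= exp (1 / 2) * exp (- u)).
  { rewrite <- exp_plus. apply exp_le.
    pose proof (Rle_0_sqr (u - 1)). unfold Rsqr in *. simpl. lra. }
  pose proof (exp_pos (- u ^ 2 / 2)). pose proof (Rpower_pos u p).
  rewrite Hsplit.
  apply Rle_trans with ((1 + u ^ 2) * exp (- u ^ 2 / 2) * exp (- u ^ 2 / 2)).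
  { rewrite <- Rmult_assoc. apply Rmult_le_compat_r; [lra|]. apply Rmult_le_compat_r; lra. }
  apply Rle_trans with (2 * exp (- u ^ 2 / 2)); [apply Rmult_le_compat_r; lra|].
  lra.
Qed.

Lemma RInt_exp_neg A B : RInt (fun u => exp (- u)) A B = exp (- A) - exp (- B).
Proof.
  apply (@is_RInt_unique R_CompleteNormedModule).
  replace (exp (- A) - exp (- B)) with (minus (- exp (- B)) (- exp (- A)))
    by (unfold minus, plus, opp; simpl; ring).
  apply (@is_RInt_derive R_CompleteNormedModule (fun u => - exp (- u))).
  - intros x _. auto_derive; auto. ring.
  - intros x _. apply continuous_of_ex_derive. auto_derive. auto.
Qed.

Lemma RInt_gauss_pow_le p A B : 0 <= p <= 2 -> 0 < A -> A <= B ->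
  RInt (gauss_pow p) A B <= 2 * exp (1 / 2).
Proof.
  intros hp hA hAB.
  assert (Hexp : ex_RInt (fun u => exp (- u)) A B).
  { apply ex_RInt_continuous_R; auto. intros x _.
    apply continuous_of_ex_derive. auto_derive. auto. }
  apply Rle_trans with (RInt (fun u => 2 * exp (1 / 2) * exp (- u)) A B).
  { apply RInt_le; auto; [apply ex_RInt_gauss_pow; auto|apply ex_RInt_scal_R; auto|].
    intros x hx. apply gauss_pow_le_exp_neg; lra. }
  rewrite RInt_scal_R, RInt_exp_neg by exact Hexp.
  pose proof (exp_pos (- B)). pose proof (exp_pos (1 / 2)).
  assert (exp (- A) <= 1) by (rewrite <- exp_0; apply exp_le; lra).
  nra.
Qed.

Lemma gauss_pow_le_id p t : 0 <= p -> 0 < t -> t <= 1 -> gauss_pow (p + 1) t <= t.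
Proof.
  intros hp ht ht1. unfold gauss_pow.
  rewrite Rpower_plus, Rpower_1 by exact ht.
  pose proof (Rpower_le_1 t p ht ht1 hp). pose proof (Rpower_pos t p).
  assert (exp (- t ^ 2) <= 1) by (rewrite <- exp_0; apply exp_le; nra).
  pose proof (exp_pos (- t ^ 2)).
  assert (Rpower t p * t <= t) by nra. nra.
Qed.

Lemma pow_div_fact_le_exp x n : 0 <= x -> x ^ n / INR (fact n) <= exp x.
Proof.
  intros hx. destruct n as [|m]; [exact (exp_ge_taylor x 0 hx)|].
  eapply Rle_trans; [|apply (exp_ge_taylor x (S m) hx)]. rewrite tech5.
  assert (0 <= sum_f_R0 (fun k => x ^ k / INR (fact k)) m); [|lra].
  apply cond_pos_sum. intros k. apply Rle_mult_inv_pos; [apply pow_le, hx|apply INR_fact_lt_0].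
Qed.

Lemma gauss_pow_le_fact_div q m t : q <= INR m -> 1 <= t ->
  gauss_pow q t <= INR (fact (S m)) / t.
Proof.
  intros hqm ht. set (K := INR (fact (S m))).
  assert (hK : 0 < K) by apply INR_fact_lt_0.
  assert (Hpow : Rpower t q <= t ^ m).
  { rewrite <- Rpower_pow by lra. apply Rle_Rpower; lra. }
  assert (Hsplit : (t ^ 2) ^ S m = t ^ m * t ^ (m + 2))
    by (rewrite <- pow_mult, <- pow_add; f_equal; lia).
  assert (Htm : 1 <= t ^ m) by (apply pow_R1_Rle; lra).
  assert (Ht2 : t <= t ^ (m + 2)).
  { replace (m + 2)%nat with (S (m + 1)) by lia. simpl.
    pose proof (pow_R1_Rle t (m + 1) ht). nra. }
  assert (Hexp : exp (- t ^ 2) <= K / (t ^ m * t ^ (m + 2))).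
  { rewrite exp_Ropp, <- Hsplit.
    assert (0 < (t ^ 2) ^ S m) by (apply pow_lt, pow_lt; lra).
    replace (K / (t ^ 2) ^ S m) with (/ ((t ^ 2) ^ S m / K)) by (field; split; lra).
    apply Rinv_le_contravar; [apply Rdiv_lt_0_compat; lra|].
    apply pow_div_fact_le_exp, pow2_ge_0. }
  unfold gauss_pow.
  apply Rle_trans with (t ^ m * (K / (t ^ m * t ^ (m + 2)))).
  { apply Rmult_le_compat; [left; apply Rpower_pos|left; apply exp_pos|exact Hpow|exact Hexp]. }
  replace (t ^ m * (K / (t ^ m * t ^ (m + 2)))) with (K / t ^ (m + 2)) by (field; lra).
  apply Rmult_le_compat_l; [lra|]. apply Rinv_le_contravar; lra.
Qed.

Lemma gauss_pow_vanishes_at_infty q eps : 0 < eps ->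
  exists T, forall t, T <= t -> gauss_pow q t < eps.
Proof.
  intros heps. destruct (INR_unbounded q) as [m hm].
  set (K := INR (fact (S m))). assert (hK : 0 < K) by apply INR_fact_lt_0.
  exists (Rmax 1 (K / eps + 1)). intros t ht.
  pose proof (Rmax_l 1 (K / eps + 1)). pose proof (Rmax_r 1 (K / eps + 1)).
  apply Rle_lt_trans with (K / t); [apply gauss_pow_le_fact_div; lra|].
  apply Rmult_lt_reg_r with t; [lra|].
  replace (K / t * t) with K by (field; lra).
  apply Rmult_lt_reg_l with (/ eps); [apply Rinv_0_lt_compat; lra|].
  replace (/ eps * (eps * t)) with t by (field; lra).
  replace (/ eps * K) with (K / eps) by (unfold Rdiv; ring). lra.
Qed.

Lemma is_RInt_0_oo_gauss_pow_add2 p J : 0 <= p ->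
  is_RInt_0_oo (gauss_pow p) J -> is_RInt_0_oo (gauss_pow (p + 2)) ((p + 1) / 2 * J).
Proof.
  intros hp HJ. pose proof (is_RInt_0_oo_near _ _ HJ) as Hnear.
  destruct HJ as [_ [_ [HJub _]]].
  repeat split; [intros; apply ex_RInt_gauss_pow; auto|intros; apply gauss_pow_ge0| |].
  - intros A B hA hAB. apply Rnot_lt_le. intros Hlt.
    set (d := RInt (gauss_pow (p + 2)) A B - (p + 1) / 2 * J).
    set (A' := Rmin A (Rmin 1 d)).
    assert (hA' : 0 < A' /\ A' <= A /\ A' <= 1 /\ A' <= d).
    { unfold A'. pose proof (Rmin_l A (Rmin 1 d)). pose proof (Rmin_r A (Rmin 1 d)).
      pose proof (Rmin_l 1 d). pose proof (Rmin_r 1 d).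
      repeat split; try lra. apply Rmin_glb_lt; [lra|apply Rmin_glb_lt; unfold d; lra]. }
    assert (Hshrink : RInt (gauss_pow (p + 2)) A B <= RInt (gauss_pow (p + 2)) A' B).
    { apply RInt_le_of_subinterval; try lra; [intros; apply gauss_pow_ge0|].
      apply ex_RInt_gauss_pow; lra. }
    rewrite (RInt_gauss_pow_add2 p A' B) in Hshrink by lra.
    assert (RInt (gauss_pow p) A' B <= J) by (apply HJub; lra).
    pose proof (gauss_pow_le_id p A' hp ltac:(lra) ltac:(lra)).
    pose proof (gauss_pow_ge0 (p + 1) B).
    assert ((p + 1) / 2 * RInt (gauss_pow p) A' B <= (p + 1) / 2 * J)
      by (apply Rmult_le_compat_l; lra).
    unfold d in hA'. lra.
  - intros eps heps.
    destruct (Hnear (eps / (p + 1))) as [A0 [B0 [hA0 [hAB0 H0]]]]; [apply Rdiv_lt_0_compat; lra|].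
    destruct (gauss_pow_vanishes_at_infty (p + 1) eps heps) as [T HT].
    pose proof (Rmax_l B0 T). pose proof (Rmax_r B0 T). set (B := Rmax B0 T) in *.
    exists A0, B. split; [lra|split; [lra|]].
    rewrite RInt_gauss_pow_add2 by lra.
    pose proof (H0 A0 B hA0 (Rle_refl _) ltac:(lra)).
    pose proof (HT B ltac:(lra)).
    pose proof (gauss_pow_ge0 (p + 1) A0).
    assert (Happrox : (p + 1) / 2 * (J - eps / (p + 1)) <= (p + 1) / 2 * RInt (gauss_pow p) A0 B)
      by (apply Rmult_le_compat_l; lra).
    replace ((p + 1) / 2 * (J - eps / (p + 1))) with ((p + 1) / 2 * J - eps / 2) in Happrox
      by (field; lra).
    lra.
Qed.

Lemma ex_is_RInt_0_oo_gauss_pow p : 0 <= p -> exists J, is_RInt_0_oo (gauss_pow p) J.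
Proof.
  destruct (INR_unbounded p) as [m hm]. revert p hm.
  induction m as [|m IH]; intros p hm hp; [simpl in hm; lra|].
  destruct (Rle_dec p 2).
  - apply is_RInt_0_oo_exists with (2 * exp (1 / 2)).
    + intros; apply ex_RInt_gauss_pow; auto.
    + intros; apply gauss_pow_ge0.
    + intros; apply RInt_gauss_pow_le; auto; lra.
  - rewrite S_INR in hm. destruct (IH (p - 2)) as [J HJ]; [lra|lra|].
    exists ((p - 2 + 1) / 2 * J).
    replace p with (p - 2 + 2) at 1 by ring.
    apply is_RInt_0_oo_gauss_pow_add2; [lra|exact HJ].
Qed.

Lemma is_RInt_0_oo_gauss_pow_shift q J k : 0 <= q -> is_RInt_0_oo (gauss_pow q) J ->
  is_RInt_0_oo (gauss_pow (q + 2 * INR k)) (poch ((q + 1) / 2) k * J).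
Proof.
  intros hq HJ. induction k as [|k IH].
  - simpl. replace (q + 2 * 0) with q by ring. rewrite Rmult_1_l. exact HJ.
  - rewrite S_INR. replace (q + 2 * (INR k + 1)) with (q + 2 * INR k + 2) by ring.
    simpl poch.
    replace (poch ((q + 1) / 2) k * ((q + 1) / 2 + INR k) * J)
      with ((q + 2 * INR k + 1) / 2 * (poch ((q + 1) / 2) k * J)) by field.
    apply is_RInt_0_oo_gauss_pow_add2; [pose proof (pos_INR k); lra|exact IH].
Qed.

Lemma is_RInt_0_oo_gauss_pow_pos q J : 0 <= q -> is_RInt_0_oo (gauss_pow q) J -> 0 < J.
Proof.
  intros hq [Hex [_ [Hub _]]].
  apply Rlt_le_trans with (RInt (gauss_pow q) 1 2); [|apply Hub; lra].
  apply Rlt_le_trans with (RInt (fun _ => exp (-4)) 1 2).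
  { rewrite RInt_const_R. pose proof (exp_pos (-4)). lra. }
  apply RInt_le; [lra|apply ex_RInt_const_R|apply Hex; lra|].
  intros u hu. unfold gauss_pow.
  assert (1 <= Rpower u q).
  { rewrite <- (Rpower_O u) by lra. apply Rle_Rpower; lra. }
  assert (exp (-4) <= exp (- u ^ 2)) by (apply exp_le; nra).
  pose proof (exp_pos (-4)). nra.
Qed.

Lemma RInt_Gamma_integrand a A B : 0 < A -> A <= B ->
  RInt (fun t => Rpower t (a - 1) * exp (- t)) A B =
  2 * RInt (gauss_pow (2 * a - 1)) (sqrt A) (sqrt B).
Proof.
  intros hA hAB.
  assert (hsA : 0 < sqrt A) by (apply sqrt_lt_R0; auto).
  assert (hsAB : sqrt A <= sqrt B) by (apply sqrt_le_1; lra).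
  set (g := fun t => Rpower t (a - 1) * exp (- t)).
  assert (Hsubst : is_RInt (fun u => scal (2 * u) (g (u ^ 2))) (sqrt A) (sqrt B) (RInt g A B)).
  { rewrite <- (pow2_sqrt A) at 2 by lra. rewrite <- (pow2_sqrt B) at 2 by lra.
    apply (@is_RInt_comp R_CompleteNormedModule g (fun u => u ^ 2) (fun u => 2 * u)).
    - intros x hx. rewrite Rmin_left, Rmax_right in hx by lra.
      apply continuous_of_ex_derive. unfold g, Rpower. auto_derive. apply pow_lt. lra.
    - intros x hx. split; [auto_derive; auto; ring|].
      apply continuous_of_ex_derive. auto_derive. auto. }
  apply (@is_RInt_unique R_CompleteNormedModule) in Hsubst. rewrite <- Hsubst.
  rewrite <- RInt_scal_R by (apply ex_RInt_gauss_pow; lra).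
  apply RInt_ext_R. rewrite Rmin_left, Rmax_right by lra. intros x hx.
  unfold scal; simpl; unfold mult; simpl. unfold g, gauss_pow, Rpower.
  replace (x * (x * 1)) with (x ^ 2) by ring. rewrite ln_pow by lra.
  replace ((2 * a - 1) * ln x) with ((a - 1) * (INR 2 * ln x) + ln x) by (simpl; ring).
  rewrite exp_plus, exp_ln by lra. ring.
Qed.

Lemma Gamma_gauss_pow a J : is_RInt_0_oo (gauss_pow (2 * a - 1)) J -> Gamma a = 2 * J.
Proof.
  intros [_ [_ [Hub Happ]]]. unfold Gamma. apply RInt_gen_0_oo.
  repeat split.
  - intros A B hA hAB. apply ex_RInt_continuous_R; auto. intros x hx.
    apply continuous_of_ex_derive. unfold Rpower. auto_derive. lra.
  - intros u hu. apply Rmult_le_pos; left; [apply Rpower_pos|apply exp_pos].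
  - intros A B hA hAB. rewrite RInt_Gamma_integrand by auto.
    assert (RInt (gauss_pow (2 * a - 1)) (sqrt A) (sqrt B) <= J); [|lra].
    apply Hub; [apply sqrt_lt_R0; auto|apply sqrt_le_1; lra].
  - intros eps heps. destruct (Happ (eps / 2)) as [A [B [hA [hAB hl]]]]; [lra|].
    exists (A ^ 2), (B ^ 2).
    assert (0 < A ^ 2) by (apply pow_lt; auto). assert (A ^ 2 <= B ^ 2) by (apply pow_incr; lra).
    split; [assumption|split; [assumption|]].
    rewrite RInt_Gamma_integrand by assumption.
    rewrite (sqrt_pow2 A), (sqrt_pow2 B) by lra. lra.
Qed.

(** * The integral representation of Kummer's function *)

Definition hyp0F1_coef (b : R) (k : nat) : R := / (poch b k * INR (fact k)).

Definition hyp0F1 (b z : R) : R := PSeries (hyp0F1_coef b) z.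

Lemma hyp0F1_coef_pos b k : 0 < b -> 0 < hyp0F1_coef b k.
Proof.
  intros hb. apply Rinv_0_lt_compat, Rmult_lt_0_compat; [apply poch_pos; auto|apply INR_fact_lt_0].
Qed.

Lemma ex_series_abs_hyp0F1 b z : 0 < b ->
  ex_series (fun k => Rabs (hyp0F1_coef b k * z ^ k)).
Proof.
  intros hb.
  apply (@ex_series_le R_AbsRing R_CompleteNormedModule)
    with (fun k => (Rabs z / b) ^ k / INR (fact k)); [|eexists; apply is_series_exp].
  intros k. unfold norm; simpl; unfold abs; simpl. rewrite Rabs_Rabsolu.
  rewrite Rabs_mult, Rabs_right by (left; apply hyp0F1_coef_pos; auto).
  rewrite <- RPow_abs. unfold hyp0F1_coef, Rdiv. rewrite Rpow_mult_distr, pow_inv, Rinv_mult.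
  pose proof (pow_lt b k hb). pose proof (poch_ge_pow b k hb).
  pose proof (INR_fact_lt_0 k). pose proof (pow_le (Rabs z) k (Rabs_pos z)).
  replace (/ poch b k * / INR (fact k) * Rabs z ^ k)
    with (Rabs z ^ k * / poch b k * / INR (fact k)) by ring.
  apply Rmult_le_compat_r; [left; apply Rinv_0_lt_compat; auto|].
  apply Rmult_le_compat_l; [auto|]. apply Rinv_le_contravar; auto.
Qed.

Lemma is_series_hyp0F1 b z : 0 < b ->
  is_series (fun k => hyp0F1_coef b k * z ^ k) (hyp0F1 b z).
Proof. intros hb. apply Series_correct, ex_series_Rabs, ex_series_abs_hyp0F1, hb. Qed.

Lemma CV_disk_le_CV_radius a x : CV_disk a x -> Rbar_le x (CV_radius a).
Proof. intros H. unfold CV_radius. apply (Lub_Rbar_correct (CV_disk a)). exact H. Qed.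

Lemma continuous_hyp0F1 b z : 0 < b -> continuous (hyp0F1 b) z.
Proof.
  intros hb. apply continuity_pt_filterlim, PSeries_continuity.
  assert (H : Rbar_le (Rabs z + 1) (CV_radius (hyp0F1_coef b)))
    by (apply CV_disk_le_CV_radius, ex_series_abs_hyp0F1, hb).
  destruct (CV_radius (hyp0F1_coef b)); simpl in *; auto. lra.
Qed.

Lemma sum_le_hyp0F1 b z N : 0 < b -> 0 <= z ->
  sum_f_R0 (fun k => hyp0F1_coef b k * z ^ k) N <= hyp0F1 b z.
Proof.
  intros hb hz. apply sum_f_R0_le_is_series; [apply is_series_hyp0F1, hb|].
  intros k. apply Rmult_le_pos; [left; apply hyp0F1_coef_pos, hb|apply pow_le, hz].
Qed.

Lemma hyp0F1_tail_le b z Z N : 0 < b -> 0 <= z -> z <= Z ->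
  hyp0F1 b z - sum_f_R0 (fun k => hyp0F1_coef b k * z ^ k) N <=
  hyp0F1 b Z - sum_f_R0 (fun k => hyp0F1_coef b k * Z ^ k) N.
Proof.
  intros hb hz hZ.
  assert (Ez : ex_series (fun k => hyp0F1_coef b k * z ^ k))
    by (eexists; apply is_series_hyp0F1, hb).
  assert (EZ : ex_series (fun k => hyp0F1_coef b k * Z ^ k))
    by (eexists; apply is_series_hyp0F1, hb).
  unfold hyp0F1, PSeries.
  rewrite (Series_incr_n _ (S N)), (Series_incr_n (fun k => hyp0F1_coef b k * Z ^ k) (S N))
    by (auto; lia).
  change (pred (S N)) with N.
  assert (Series (fun k => hyp0F1_coef b (S N + k) * z ^ (S N + k)) <=
          Series (fun k => hyp0F1_coef b (S N + k) * Z ^ (S N + k))); [|lra].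
  apply Series_le; [|apply (ex_series_incr_n (fun k => hyp0F1_coef b k * Z ^ k) (S N)), EZ].
  intros k. pose proof (hyp0F1_coef_pos b (S N + k) hb). split.
  - apply Rmult_le_pos; [lra|apply pow_le, hz].
  - apply Rmult_le_compat_l; [lra|]. apply pow_incr; lra.
Qed.

Definition kummer_integrand (a b x u : R) : R :=
  2 * gauss_pow (2 * a - 1) u * hyp0F1 b (x * u ^ 2).

Lemma gauss_pow_shift q k u : 0 < u ->
  gauss_pow q u * (u ^ 2) ^ k = gauss_pow (q + 2 * INR k) u.
Proof.
  intros hu. unfold gauss_pow. rewrite Rpower_plus, <- Rpower_mult.
  replace (Rpower u 2) with (u ^ 2) by (rewrite <- (Rpower_pow 2 u hu); f_equal; simpl; ring).
  rewrite Rpower_pow by (apply pow_lt; auto). ring.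
Qed.

Lemma gauss_pow_le_Rpower p u B : 0 <= p -> 0 < u -> u <= B -> gauss_pow p u <= Rpower B p.
Proof.
  intros hp hu huB. unfold gauss_pow.
  pose proof (Rle_Rpower_l u B p hp ltac:(lra)). pose proof (Rpower_pos u p).
  assert (exp (- u ^ 2) <= 1) by (rewrite <- exp_0; apply exp_le; nra).
  pose proof (exp_pos (- u ^ 2)). nra.
Qed.

Lemma kummer_integrand_uniform a b x A B : 1 / 2 <= a -> 0 < b -> 0 <= x -> 0 < A -> A <= B ->
  forall eps, 0 < eps -> exists N, forall u, A <= u <= B ->
    kummer_integrand a b x u -
    sum_f_R0 (fun k => 2 * gauss_pow (2 * a - 1) u * (hyp0F1_coef b k * (x * u ^ 2) ^ k)) N
    <= eps.
Proof.
  intros ha hb hx hA hAB eps heps.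
  set (M := 2 * Rpower B (2 * a - 1) + 1).
  assert (hM : 0 < M) by (unfold M; pose proof (Rpower_pos B (2 * a - 1)); lra).
  destruct (is_series_sum_f_R0_near _ _ (is_series_hyp0F1 b (x * B ^ 2) hb) (eps / M))
    as [N HN]; [apply Rdiv_lt_0_compat; auto|].
  exists N. intros u hu.
  pose proof (HN N (le_n N)) as HtailZ. rewrite Rabs_lt_between in HtailZ.
  assert (hz : 0 <= x * u ^ 2) by (apply Rmult_le_pos; [auto|apply pow2_ge_0]).
  assert (hzZ : x * u ^ 2 <= x * B ^ 2) by (apply Rmult_le_compat_l; [auto|apply pow_incr; lra]).
  set (T := hyp0F1 b (x * u ^ 2) - sum_f_R0 (fun k => hyp0F1_coef b k * (x * u ^ 2) ^ k) N).
  assert (hT : 0 <= T <= eps / M).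
  { pose proof (hyp0F1_tail_le b (x * u ^ 2) (x * B ^ 2) N hb hz hzZ).
    pose proof (sum_le_hyp0F1 b (x * u ^ 2) N hb hz). unfold T. lra. }
  replace (kummer_integrand a b x u - _) with (2 * gauss_pow (2 * a - 1) u * T).
  2:{ unfold kummer_integrand, T. rewrite Rmult_minus_distr_l, scal_sum.
      f_equal. apply sum_eq. intros k _. ring. }
  pose proof (gauss_pow_le_Rpower (2 * a - 1) u B ltac:(lra) ltac:(lra) ltac:(lra)).
  pose proof (gauss_pow_ge0 (2 * a - 1) u).
  apply Rle_trans with (M * (eps / M)); [|right; field; lra].
  apply Rle_trans with (M * T); [|apply Rmult_le_compat_l; lra].
  apply Rmult_le_compat_r; [lra|unfold M; lra].
Qed.

Lemma is_RInt_0_oo_kummer_integrand a b x J : 1 / 2 <= a -> 0 < b -> 0 <= x ->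
  is_RInt_0_oo (gauss_pow (2 * a - 1)) J ->
  is_RInt_0_oo (kummer_integrand a b x) (2 * J * kummerM a b x).
Proof.
  intros ha hb hx HJ.
  apply (is_RInt_0_oo_series
    (fun k u => 2 * gauss_pow (2 * a - 1) u * (hyp0F1_coef b k * (x * u ^ 2) ^ k)) _
    (fun k => 2 * J * kummer_term a b x k)).
  - intros k.
    apply is_RInt_0_oo_ext with
      (fun u => 2 * hyp0F1_coef b k * x ^ k * gauss_pow (2 * a - 1 + 2 * INR k) u).
    { intros u hu. rewrite <- gauss_pow_shift by auto. rewrite Rpow_mult_distr. ring. }
    replace (2 * J * kummer_term a b x k)
      with (2 * hyp0F1_coef b k * x ^ k * (poch ((2 * a - 1 + 1) / 2) k * J)).
    2:{ unfold kummer_term, hyp0F1_coef. replace ((2 * a - 1 + 1) / 2) with a by field.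
        pose proof (poch_pos b k hb). pose proof (INR_fact_lt_0 k). field. lra. }
    apply is_RInt_0_oo_scal; [|apply is_RInt_0_oo_gauss_pow_shift; auto; lra].
    pose proof (hyp0F1_coef_pos b k hb). pose proof (pow_le x k hx). nra.
  - intros u hu. unfold kummer_integrand.
    exact (is_series_scal_l (2 * gauss_pow (2 * a - 1) u) _ _ (is_series_hyp0F1 b _ hb)).
  - exact (is_series_scal_l (2 * J) _ _ (Series_correct _
      (ex_series_Rabs _ (ex_series_abs_kummer_term a b x ltac:(lra) hb)))).
  - intros A B hA hAB. apply ex_RInt_continuous_R; auto. intros u hu. unfold kummer_integrand.
    apply (@continuous_mult R_UniformSpace R_AbsRing).
    + apply continuous_of_ex_derive. unfold gauss_pow, Rpower. auto_derive. lra.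
    + apply (continuous_comp (fun u => x * u ^ 2) (hyp0F1 b)).
      * apply continuous_of_ex_derive. auto_derive. auto.
      * apply continuous_hyp0F1, hb.
  - intros A B hA hAB. apply kummer_integrand_uniform; auto.
Qed.

(** * Two-sided bounds for [hyp0F1 b (w ^ 2)] *)

Lemma ln_le_sub_1 t : 0 < t -> ln t <= t - 1.
Proof. intros ht. pose proof (exp_ineq1_le (ln t)) as H. rewrite exp_ln in H by exact ht. lra. Qed.

Lemma Rpower_opp_antimono X Y d : 0 < X -> X <= Y -> 0 <= d -> Rpower Y (- d) <= Rpower X (- d).
Proof.
  intros hX hXY hd. rewrite !Rpower_Ropp.
  apply Rinv_le_contravar; [apply Rpower_pos|apply Rle_Rpower_l; lra].
Qed.

Lemma Rpower_mul_opp X d : 0 < X -> Rpower X d * Rpower X (- d) = 1.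
Proof. intros hX. rewrite <- Rpower_plus, Rplus_opp_r. apply Rpower_O, hX. Qed.

(* The tangent line at [m] of the convex function [X |-> X ^ (-d)]. *)
Lemma Rpower_opp_ge_tangent X m d : 0 < X -> 0 < m -> 0 <= d ->
  Rpower m (- d) * (1 - d * (X / m - 1)) <= Rpower X (- d).
Proof.
  intros hX hm hd.
  assert (ht : 0 < X / m) by (apply Rdiv_lt_0_compat; auto).
  replace (Rpower X (- d)) with (Rpower m (- d) * Rpower (X / m) (- d))
    by (rewrite Rpower_mult_distr by auto; f_equal; field; lra).
  apply Rmult_le_compat_l; [left; apply Rpower_pos|].
  unfold Rpower. pose proof (exp_ineq1_le (- d * ln (X / m))).
  pose proof (ln_le_sub_1 (X / m) ht). nra.
Qed.

Lemma Rpower_mul_tangent_le X m d : 0 < X -> 0 < m -> 0 <= d ->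
  Rpower X d * (1 - d * (X / m - 1)) <= Rpower m d.
Proof.
  intros hX hm hd. pose proof (Rpower_opp_ge_tangent X m d hX hm hd) as T.
  pose proof (Rpower_pos X d). pose proof (Rpower_pos m d).
  apply Rmult_le_compat_l with (r := Rpower X d * Rpower m d) in T; [|nra].
  replace (Rpower X d * Rpower m d * (Rpower m (- d) * (1 - d * (X / m - 1))))
    with (Rpower X d * (1 - d * (X / m - 1)) * (Rpower m d * Rpower m (- d))) in T by ring.
  replace (Rpower X d * Rpower m d * Rpower X (- d))
    with (Rpower m d * (Rpower X d * Rpower X (- d))) in T by ring.
  rewrite !Rpower_mul_opp in T by auto. lra.
Qed.

Lemma Rpower_opp_le_mul n z d : 0 < n -> 0 < z -> 0 <= d <= 1 ->
  Rpower n (- d) <= Rpower z (- d) * (1 + z / n).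
Proof.
  intros hn hz hd. pose proof (Rpower_pos z (- d)).
  destruct (Rle_dec z n).
  - pose proof (Rpower_opp_antimono z n d hz r ltac:(lra)).
    assert (0 <= Rpower z (- d) * (z / n))
      by (apply Rmult_le_pos; [lra|apply Rle_mult_inv_pos; lra]).
    nra.
  - assert (Hsplit : forall X, 0 < X -> Rpower X (- d) = Rpower X (1 - d) / X).
    { intros X hX. unfold Rminus. rewrite Rpower_plus, Rpower_1 by exact hX. field. lra. }
    rewrite !Hsplit by auto.
    pose proof (Rle_Rpower_l n z (1 - d) ltac:(lra) ltac:(lra)).
    apply Rle_trans with (Rpower z (1 - d) / n).
    { apply Rmult_le_compat_r; [left; apply Rinv_0_lt_compat|]; lra. }
    pose proof (Rpower_pos z (1 - d)).
    apply Rle_trans with (Rpower z (1 - d) / z * (z / n)); [right; field; lra|].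
    apply Rmult_le_compat_l; [apply Rle_mult_inv_pos|]; lra.
Qed.

Definition half_poch_ratio (b : R) (k : nat) : R := poch (1 / 2) k / poch b k.

Lemma half_poch_ratio_S b k : 0 < b ->
  half_poch_ratio b (S k) = half_poch_ratio b k * ((1 / 2 + INR k) / (b + INR k)).
Proof.
  intros hb. unfold half_poch_ratio. simpl. pose proof (poch_pos b k hb). pose proof (pos_INR k).
  field. lra.
Qed.

Lemma half_poch_ratio_pos b k : 0 < b -> 0 < half_poch_ratio b k.
Proof. intros hb. apply Rdiv_lt_0_compat; apply poch_pos; lra. Qed.

Lemma half_poch_ratio_mul_le b k : 1 / 2 <= b ->
  half_poch_ratio b k * Rpower (INR k + b) (b - 1 / 2) <= Rpower b (b - 1 / 2).
Proof.
  intros hb. set (d := b - 1 / 2). assert (hd : 0 <= d) by (unfold d; lra).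
  induction k as [|k IH].
  - unfold half_poch_ratio. simpl. rewrite Rplus_0_l. lra.
  - rewrite half_poch_ratio_S, S_INR by lra.
    pose proof (pos_INR k). pose proof (half_poch_ratio_pos b k ltac:(lra)).
    pose proof (Rpower_mul_tangent_le (INR k + 1 + b) (INR k + b) d ltac:(lra) ltac:(lra) hd) as T.
    replace (1 - d * ((INR k + 1 + b) / (INR k + b) - 1)) with ((1 / 2 + INR k) / (b + INR k)) in T
      by (unfold d; field; lra).
    eapply Rle_trans; [|exact IH]. rewrite Rmult_assoc.
    apply Rmult_le_compat_l; lra.
Qed.

Lemma half_poch_ratio_le b k : 1 / 2 <= b <= 1 ->
  half_poch_ratio b k <= Rpower (INR k + 1) (- (b - 1 / 2)).
Proof.
  intros hb. set (d := b - 1 / 2). assert (hd : 0 <= d) by (unfold d; lra).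
  pose proof (half_poch_ratio_mul_le b k ltac:(lra)) as H. fold d in H.
  pose proof (pos_INR k). pose proof (Rpower_pos (INR k + b) (- d)).
  apply Rmult_le_compat_r with (r := Rpower (INR k + b) (- d)) in H; [|lra].
  rewrite Rmult_assoc, Rpower_mul_opp, Rmult_1_r in H by lra.
  eapply Rle_trans; [exact H|].
  replace (Rpower b d * Rpower (INR k + b) (- d)) with (Rpower ((INR k + b) / b) (- d)).
  - apply Rpower_opp_antimono; [lra| |lra].
    apply Rmult_le_reg_r with b; [lra|]. unfold Rdiv. rewrite Rmult_assoc, Rinv_l by lra. nra.
  - unfold Rpower. rewrite <- exp_plus, ln_div by lra. f_equal. ring.
Qed.

Definition half_poch_ratio_const (b : R) : R := / (2 * b) * Rpower (1 / 2) (b - 1 / 2).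

Lemma half_poch_ratio_const_pos b : 0 < b -> 0 < half_poch_ratio_const b.
Proof. intros hb. apply Rmult_lt_0_compat; [apply Rinv_0_lt_compat; lra|apply Rpower_pos]. Qed.

Lemma half_poch_ratio_S_mul_ge b j : 1 / 2 <= b ->
  half_poch_ratio_const b <= half_poch_ratio b (S j) * Rpower (INR j + 1 / 2) (b - 1 / 2).
Proof.
  intros hb. set (d := b - 1 / 2). assert (hd : 0 <= d) by (unfold d; lra).
  induction j as [|j IH].
  - rewrite half_poch_ratio_S by lra. unfold half_poch_ratio, half_poch_ratio_const. simpl.
    rewrite Rplus_0_l. fold d. right. field. lra.
  - rewrite (half_poch_ratio_S b (S j)), !S_INR by lra.
    pose proof (pos_INR j). pose proof (half_poch_ratio_pos b (S j) ltac:(lra)).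
    pose proof (Rpower_mul_tangent_le (INR j + 1 / 2) (INR j + 1 + 1 / 2) d
      ltac:(lra) ltac:(lra) hd) as T.
    replace (1 - d * ((INR j + 1 / 2) / (INR j + 1 + 1 / 2) - 1))
      with ((b + (INR j + 1)) / (1 / 2 + (INR j + 1))) in T by (unfold d; field; lra).
    eapply Rle_trans; [exact IH|].
    replace (half_poch_ratio b (S j) * ((1 / 2 + (INR j + 1)) / (b + (INR j + 1)))
             * Rpower (INR j + 1 + 1 / 2) d)
      with (half_poch_ratio b (S j) * (Rpower (INR j + 1 + 1 / 2) d
             * ((1 / 2 + (INR j + 1)) / (b + (INR j + 1))))) by ring.
    apply Rmult_le_compat_l; [lra|].
    apply Rmult_le_reg_r with ((b + (INR j + 1)) / (1 / 2 + (INR j + 1)));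
      [apply Rdiv_lt_0_compat; lra|].
    replace (Rpower (INR j + 1 + 1 / 2) d * ((1 / 2 + (INR j + 1)) / (b + (INR j + 1)))
             * ((b + (INR j + 1)) / (1 / 2 + (INR j + 1))))
      with (Rpower (INR j + 1 + 1 / 2) d) by (field; lra).
    exact T.
Qed.

Lemma half_poch_ratio_ge b k : 1 / 2 <= b <= 1 ->
  half_poch_ratio_const b * Rpower (INR k + 1) (- (b - 1 / 2)) <= half_poch_ratio b k.
Proof.
  intros hb. set (d := b - 1 / 2). assert (hd : 0 <= d) by (unfold d; lra).
  pose proof (half_poch_ratio_const_pos b ltac:(lra)) as hc.
  destruct k as [|j].
  - unfold half_poch_ratio, half_poch_ratio_const. simpl.
    replace (Rpower (0 + 1) (- d)) with 1
      by (unfold Rpower; rewrite Rplus_0_l, ln_1, Rmult_0_r, exp_0; reflexivity).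
    rewrite Rmult_1_r.
    pose proof (Rpower_le_1 (1 / 2) d ltac:(lra) ltac:(lra) hd).
    pose proof (Rpower_pos (1 / 2) d).
    assert (/ (2 * b) <= 1) by (rewrite <- Rinv_1; apply Rinv_le_contravar; lra).
    assert (0 < / (2 * b)) by (apply Rinv_0_lt_compat; lra).
    fold d. nra.
  - pose proof (half_poch_ratio_S_mul_ge b j ltac:(lra)) as Hj. fold d in Hj.
    pose proof (pos_INR j). pose proof (Rpower_pos (INR j + 1 / 2) (- d)).
    apply Rmult_le_compat_r with (r := Rpower (INR j + 1 / 2) (- d)) in Hj; [|lra].
    rewrite Rmult_assoc, Rpower_mul_opp, Rmult_1_r in Hj by lra.
    eapply Rle_trans; [|exact Hj].
    apply Rmult_le_compat_l; [lra|].
    apply Rpower_opp_antimono; [lra|rewrite S_INR; lra|exact hd].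
Qed.

Definition exp_term (z : R) (m : nat) : R := z ^ m / INR (fact m).

Lemma exp_term_ge0 z m : 0 <= z -> 0 <= exp_term z m.
Proof. intros hz. apply Rle_mult_inv_pos; [apply pow_le, hz|apply INR_fact_lt_0]. Qed.

Lemma exp_term_S z m : exp_term z (S m) = z / INR (S m) * exp_term z m.
Proof.
  unfold exp_term. rewrite fact_simpl, mult_INR. simpl pow.
  pose proof (INR_fact_lt_0 m). pose proof (lt_0_INR (S m) ltac:(lia)). field. lra.
Qed.

Lemma exp_term_opp_even z k : exp_term (- z) (2 * k) = exp_term z (2 * k).
Proof.
  unfold exp_term. replace (- z) with (-1 * z) by ring.
  rewrite Rpow_mult_distr, pow_1_even, Rmult_1_l. reflexivity.
Qed.

Lemma exp_term_opp_odd z k : exp_term (- z) (S (2 * k)) = - exp_term z (S (2 * k)).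
Proof.
  unfold exp_term. replace (- z) with (-1 * z) by ring.
  rewrite Rpow_mult_distr, pow_1_odd. unfold Rdiv. ring.
Qed.

Lemma sum_exp_term_even_odd z N :
  sum_f_R0 (fun k => exp_term z (2 * k) + exp_term z (S (2 * k))) N =
  sum_f_R0 (exp_term z) (S (2 * N)).
Proof.
  induction N as [|N IH]; [simpl; ring|].
  rewrite tech5, IH. replace (S (2 * S N)) with (S (S (S (2 * N)))) by lia.
  rewrite (tech5 _ (S (S (2 * N)))), (tech5 _ (S (2 * N))).
  replace (2 * S N)%nat with (S (S (2 * N))) by lia. ring.
Qed.

Lemma fact_double k : INR (fact (2 * k)) = 4 ^ k * INR (fact k) * poch (1 / 2) k.
Proof.
  induction k as [|k IH]; [simpl; ring|].
  replace (2 * S k)%nat with (S (S (2 * k))) by lia.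
  rewrite !fact_simpl, !mult_INR, IH. simpl poch. simpl pow.
  rewrite !S_INR, mult_INR. simpl (INR 2). field.
Qed.

Lemma hyp0F1_coef_sq b w k : 0 < b ->
  hyp0F1_coef b k * (w ^ 2) ^ k = exp_term (2 * w) (2 * k) * half_poch_ratio b k.
Proof.
  intros hb. unfold hyp0F1_coef, exp_term, half_poch_ratio. rewrite fact_double.
  rewrite Rpow_mult_distr, !pow_mult.
  pose proof (poch_pos b k hb). pose proof (poch_pos (1 / 2) k ltac:(lra)).
  pose proof (INR_fact_lt_0 k). pose proof (pow_lt 4 k ltac:(lra)).
  replace (2 ^ 2) with 4 by ring. field. repeat split; lra.
Qed.

Lemma exp_term_even_mul_le z k : 0 <= z ->
  exp_term z (2 * k) * (1 + z / (INR k + 1)) <= 2 * (exp_term z (2 * k) + exp_term z (S (2 * k))).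
Proof.
  intros hz. rewrite exp_term_S.
  replace (INR (S (2 * k))) with (2 * INR k + 1) by (rewrite S_INR, mult_INR; simpl; ring).
  pose proof (exp_term_ge0 z (2 * k) hz) as he. pose proof (pos_INR k).
  assert (hc : z / (INR k + 1) <= 2 * (z / (2 * INR k + 1))).
  { unfold Rdiv. rewrite <- Rmult_assoc, (Rmult_comm 2 z), Rmult_assoc.
    apply Rmult_le_compat_l; [exact hz|].
    apply Rmult_le_reg_r with ((INR k + 1) * (2 * INR k + 1)); [nra|].
    field_simplify; lra. }
  pose proof (Rmult_le_compat_l _ _ _ he hc). nra.
Qed.

Lemma hyp0F1_sq_le b w : 1 / 2 <= b <= 1 -> 0 < w ->
  hyp0F1 b (w ^ 2) <= 2 * Rpower (2 * w) (- (b - 1 / 2)) * exp (2 * w).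
Proof.
  intros hb hw. set (z := 2 * w). set (d := b - 1 / 2).
  assert (hz : 0 < z) by (unfold z; lra). assert (hd : 0 <= d <= 1) by (unfold d; lra).
  pose proof (Rpower_pos z (- d)) as hzd.
  apply (is_series_le_of_sum_le _ _ _ (is_series_hyp0F1 b (w ^ 2) ltac:(lra))). intros N.
  apply Rle_trans with
    (2 * Rpower z (- d) * sum_f_R0 (fun k => exp_term z (2 * k) + exp_term z (S (2 * k))) N).
  - rewrite scal_sum. apply sum_Rle. intros k _.
    rewrite hyp0F1_coef_sq by lra. fold z.
    pose proof (exp_term_ge0 z (2 * k) ltac:(lra)). pose proof (pos_INR k).
    pose proof (half_poch_ratio_le b k hb) as Hratio. fold d in Hratio.
    pose proof (Rpower_opp_le_mul (INR k + 1) z d ltac:(lra) hz hd).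
    pose proof (exp_term_even_mul_le z k ltac:(lra)).
    apply Rle_trans with (exp_term z (2 * k) * (Rpower z (- d) * (1 + z / (INR k + 1)))).
    + apply Rmult_le_compat_l; lra.
    + replace (exp_term z (2 * k) * (Rpower z (- d) * (1 + z / (INR k + 1))))
        with (Rpower z (- d) * (exp_term z (2 * k) * (1 + z / (INR k + 1)))) by ring.
      nra.
  - rewrite sum_exp_term_even_odd.
    apply Rmult_le_compat_l; [lra|]. apply exp_ge_taylor. lra.
Qed.

Lemma sum_index_mul_exp_term_even z N :
  sum_f_R0 (fun k => INR k * exp_term z (2 * k)) (S N) =
  z / 2 * sum_f_R0 (fun k => exp_term z (S (2 * k))) N.
Proof.
  assert (Hstep : forall k, INR (S k) * exp_term z (2 * S k) = z / 2 * exp_term z (S (2 * k))).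
  { intros k. replace (2 * S k)%nat with (S (S (2 * k))) by lia.
    rewrite exp_term_S. replace (INR (S (S (2 * k)))) with (2 * INR (S k))
      by (rewrite !S_INR, mult_INR; simpl; ring).
    pose proof (lt_0_INR (S k) ltac:(lia)). field. lra. }
  induction N as [|N IH].
  - rewrite tech5, (Hstep 0%nat). simpl. ring.
  - rewrite tech5, IH, tech5, Hstep. ring.
Qed.

Lemma hyp0F1_coef_sq_ge b w k : 1 / 2 <= b <= 1 -> 0 < w ->
  (exp_term (2 * w) (2 * k) * (1 + (b - 1 / 2) - (b - 1 / 2) / (2 * w))
   - INR k * exp_term (2 * w) (2 * k) * ((b - 1 / 2) / (2 * w)))
  * (half_poch_ratio_const b * Rpower (2 * w) (- (b - 1 / 2)))
  <= hyp0F1_coef b k * (w ^ 2) ^ k.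
Proof.
  intros hb hw. set (z := 2 * w). set (d := b - 1 / 2).
  assert (hz : 0 < z) by (unfold z; lra). assert (hd : 0 <= d) by (unfold d; lra).
  rewrite hyp0F1_coef_sq by lra. fold z.
  pose proof (pos_INR k). pose proof (exp_term_ge0 z (2 * k) ltac:(lra)).
  pose proof (half_poch_ratio_const_pos b ltac:(lra)).
  pose proof (half_poch_ratio_ge b k hb) as Hratio. fold d in Hratio.
  pose proof (Rpower_opp_ge_tangent (INR k + 1) z d ltac:(lra) hz hd) as T.
  replace ((exp_term z (2 * k) * (1 + d - d / z) - INR k * exp_term z (2 * k) * (d / z))
    * (half_poch_ratio_const b * Rpower z (- d)))
    with (exp_term z (2 * k) *
      (half_poch_ratio_const b * (Rpower z (- d) * (1 - d * ((INR k + 1) / z - 1)))))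
    by (field; lra).
  apply Rmult_le_compat_l; [lra|].
  eapply Rle_trans; [|exact Hratio]. apply Rmult_le_compat_l; lra.
Qed.

Lemma hyp0F1_sq_ge_partial b w N : 1 / 2 <= b <= 1 -> 1 <= w ->
  half_poch_ratio_const b * Rpower (2 * w) (- (b - 1 / 2)) *
    (sum_f_R0 (fun k => exp_term (2 * w) (2 * k)) N
     - / 4 * sum_f_R0 (fun k => exp_term (2 * w) (S (2 * k))) N)
  <= hyp0F1 b (w ^ 2).
Proof.
  intros hb hw. set (z := 2 * w). set (d := b - 1 / 2).
  assert (hz : 2 <= z) by (unfold z; lra). assert (hd : 0 <= d <= 1 / 2) by (unfold d; lra).
  set (E := sum_f_R0 (fun k => exp_term z (2 * k)) N).
  set (O := sum_f_R0 (fun k => exp_term z (S (2 * k))) N).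
  set (I := sum_f_R0 (fun k => INR k * exp_term z (2 * k)) N).
  assert (hE : 0 <= E) by (apply cond_pos_sum; intros; apply exp_term_ge0; lra).
  assert (hO : 0 <= O) by (apply cond_pos_sum; intros; apply exp_term_ge0; lra).
  assert (hI : I <= z / 2 * O).
  { unfold I, O. rewrite <- sum_index_mul_exp_term_even, tech5.
    pose proof (pos_INR (S N)). pose proof (exp_term_ge0 z (2 * S N) ltac:(lra)). nra. }
  pose proof (half_poch_ratio_const_pos b ltac:(lra)).
  pose proof (Rpower_pos z (- d)).
  eapply Rle_trans; [|apply (sum_le_hyp0F1 b (w ^ 2) N); [lra|apply pow2_ge_0]].
  eapply Rle_trans; [|apply sum_Rle; intros k _; apply hyp0F1_coef_sq_ge; lra].
  fold z d. rewrite <- scal_sum, minus_sum, <- !scal_sum. fold E I.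
  apply Rmult_le_compat_l; [nra|].
  assert (d / z * I <= d / 2 * O).
  { apply Rle_trans with (d / z * (z / 2 * O)).
    - apply Rmult_le_compat_l; [apply Rle_mult_inv_pos; lra|exact hI].
    - right. field. lra. }
  assert (0 <= d - d / z) by (apply Rmult_le_reg_r with z; [lra|]; field_simplify; nra).
  nra.
Qed.

Lemma sum_exp_term_even_sub_odd z N :
  sum_f_R0 (fun k => exp_term z (2 * k)) N - / 4 * sum_f_R0 (fun k => exp_term z (S (2 * k))) N =
  3 / 8 * sum_f_R0 (exp_term z) (S (2 * N)) + 5 / 8 * sum_f_R0 (exp_term (- z)) (S (2 * N)).
Proof.
  rewrite <- !sum_exp_term_even_odd, !plus_sum.
  rewrite (sum_eq (fun k => exp_term (- z) (2 * k)) (fun k => exp_term z (2 * k)))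
    by (intros; apply exp_term_opp_even).
  rewrite (sum_eq (fun k => exp_term (- z) (S (2 * k))) (fun k => exp_term z (S (2 * k)) * -1))
    by (intros; rewrite exp_term_opp_odd; ring).
  rewrite <- scal_sum. lra.
Qed.

Lemma hyp0F1_sq_ge b w : 1 / 2 <= b <= 1 -> 1 <= w ->
  3 / 8 * half_poch_ratio_const b * Rpower (2 * w) (- (b - 1 / 2)) * exp (2 * w)
  <= hyp0F1 b (w ^ 2).
Proof.
  intros hb hw. set (z := 2 * w). set (C := half_poch_ratio_const b * Rpower z (- (b - 1 / 2))).
  assert (hC : 0 < C).
  { apply Rmult_lt_0_compat; [apply half_poch_ratio_const_pos; lra|apply Rpower_pos]. }
  apply Rnot_lt_le. intros Hlt.
  set (eps := 5 / 8 * exp (- z)).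
  assert (heps : 0 < eps) by (unfold eps; pose proof (exp_pos (- z)); lra).
  destruct (is_series_sum_f_R0_near _ _ (is_series_exp z) eps heps) as [N1 HN1].
  destruct (is_series_sum_f_R0_near _ _ (is_series_exp (- z)) eps heps) as [N2 HN2].
  pose proof (HN1 (S (2 * (N1 + N2))) ltac:(lia)) as A1.
  pose proof (HN2 (S (2 * (N1 + N2))) ltac:(lia)) as A2.
  rewrite Rabs_lt_between in A1, A2. fold (exp_term z) (exp_term (- z)) in A1, A2.
  pose proof (hyp0F1_sq_ge_partial b w (N1 + N2) hb hw) as Hpartial.
  fold z C in Hpartial. rewrite sum_exp_term_even_sub_odd in Hpartial.
  assert (C * (3 / 8 * exp z) < C * (3 / 8 * sum_f_R0 (exp_term z) (S (2 * (N1 + N2)))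
            + 5 / 8 * sum_f_R0 (exp_term (- z)) (S (2 * (N1 + N2)))))
    by (apply Rmult_lt_compat_l; unfold eps in *; lra).
  unfold C in *. lra.
Qed.

(** * Comparison with [exp (Gfun alpha beta y u)] *)

Definition kummer_upper_const (alpha : R) : R := 4 * Rpower 2 (- (alpha - 1 / 2)).

Definition kummer_lower_const (alpha : R) : R :=
  3 / 4 * half_poch_ratio_const alpha * Rpower 2 (- (alpha - 1 / 2)).

Lemma kummer_upper_const_pos alpha : 0 < kummer_upper_const alpha.
Proof. unfold kummer_upper_const. pose proof (Rpower_pos 2 (- (alpha - 1 / 2))). lra. Qed.

Lemma kummer_lower_const_pos alpha : 0 < alpha -> 0 < kummer_lower_const alpha.
Proof.
  intros ha. unfold kummer_lower_const. pose proof (half_poch_ratio_const_pos alpha ha).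
  pose proof (Rpower_pos 2 (- (alpha - 1 / 2))).
  apply Rmult_lt_0_compat; [apply Rmult_lt_0_compat|]; lra.
Qed.

Lemma Gamma_pos a : 1 / 2 <= a -> 0 < Gamma a.
Proof.
  intros ha. destruct (ex_is_RInt_0_oo_gauss_pow (2 * a - 1)) as [J HJ]; [lra|].
  rewrite (Gamma_gauss_pow a J HJ).
  pose proof (is_RInt_0_oo_gauss_pow_pos (2 * a - 1) J ltac:(lra) HJ). lra.
Qed.

Lemma gauss_pow_mul_exp_Gfun alpha beta y u : y < 0 -> 0 < u ->
  gauss_pow (2 * (alpha - beta) - 1) u *
    (Rpower (2 * (sqrt (- y) * u)) (- (alpha - 1 / 2)) * exp (2 * (sqrt (- y) * u)))
  = Rpower 2 (- (alpha - 1 / 2)) * Rpower (- y) ((1 - 2 * alpha) / 4) * exp (Gfun alpha beta y u).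
Proof.
  intros hy hu. assert (hs : 0 < sqrt (- y)) by (apply sqrt_lt_R0; lra).
  unfold gauss_pow, Gfun, Rpower. rewrite !ln_mult by (try apply Rmult_lt_0_compat; lra).
  replace (ln (sqrt (- y))) with (ln (- y) / 2)
    by (rewrite <- Rpower_sqrt by lra; unfold Rpower; rewrite ln_exp; field).
  rewrite <- !exp_plus. f_equal. field.
Qed.

Lemma kummer_integrand_le_exp_Gfun alpha beta y u : 1 / 2 <= alpha <= 1 -> y < 0 -> 0 < u ->
  kummer_integrand (alpha - beta) alpha (- y) u <=
  kummer_upper_const alpha * Rpower (- y) ((1 - 2 * alpha) / 4) * exp (Gfun alpha beta y u).
Proof.
  intros ha hy hu. assert (hs : 0 < sqrt (- y)) by (apply sqrt_lt_R0; lra).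
  unfold kummer_integrand, kummer_upper_const.
  replace (- y * u ^ 2) with ((sqrt (- y) * u) ^ 2) by (rewrite Rpow_mult_distr, pow2_sqrt; lra).
  pose proof (hyp0F1_sq_le alpha (sqrt (- y) * u) ha ltac:(nra)).
  pose proof (gauss_pow_ge0 (2 * (alpha - beta) - 1) u).
  pose proof (gauss_pow_mul_exp_Gfun alpha beta y u hy hu). nra.
Qed.

Lemma exp_Gfun_le_kummer_integrand alpha beta y u :
  1 / 2 <= alpha <= 1 -> y < 0 -> 1 / sqrt (- y) <= u ->
  kummer_lower_const alpha * Rpower (- y) ((1 - 2 * alpha) / 4) * exp (Gfun alpha beta y u)
  <= kummer_integrand (alpha - beta) alpha (- y) u.
Proof.
  intros ha hy hu. assert (hs : 0 < sqrt (- y)) by (apply sqrt_lt_R0; lra).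
  assert (hu0 : 0 < u) by (eapply Rlt_le_trans; [|exact hu]; apply Rdiv_lt_0_compat; lra).
  assert (hw : 1 <= sqrt (- y) * u).
  { apply Rmult_le_compat_l with (r := sqrt (- y)) in hu; [|lra].
    replace (sqrt (- y) * (1 / sqrt (- y))) with 1 in hu by (field; lra). exact hu. }
  unfold kummer_integrand, kummer_lower_const.
  replace (- y * u ^ 2) with ((sqrt (- y) * u) ^ 2) by (rewrite Rpow_mult_distr, pow2_sqrt; lra).
  pose proof (hyp0F1_sq_ge alpha (sqrt (- y) * u) ha hw).
  pose proof (gauss_pow_ge0 (2 * (alpha - beta) - 1) u).
  apply Rle_trans with (3 / 4 * half_poch_ratio_const alpha * (Rpower 2 (- (alpha - 1 / 2))
    * Rpower (- y) ((1 - 2 * alpha) / 4) * exp (Gfun alpha beta y u))); [right; ring|].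
  rewrite <- (gauss_pow_mul_exp_Gfun alpha beta y u hy hu0).
  apply Rle_trans with (2 * gauss_pow (2 * (alpha - beta) - 1) u *
    (3 / 8 * half_poch_ratio_const alpha * Rpower (2 * (sqrt (- y) * u)) (- (alpha - 1 / 2)) *
     exp (2 * (sqrt (- y) * u)))); [right; field|].
  apply Rmult_le_compat_l; lra.
Qed.

Lemma exp_Gfun_le_exp_2 alpha beta y u : 1 / 2 <= alpha -> beta <= 0 -> y <= -1 ->
  0 < u -> u <= 1 / sqrt (- y) -> exp (Gfun alpha beta y u) <= exp 2.
Proof.
  intros ha hb hy hu hup.
  assert (hs : 1 <= sqrt (- y)) by (rewrite <- sqrt_1; apply sqrt_le_1; lra).
  assert (hsu : sqrt (- y) * u <= 1).
  { apply Rmult_le_compat_l with (r := sqrt (- y)) in hup; [|lra].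
    replace (sqrt (- y) * (1 / sqrt (- y))) with 1 in hup by (field; lra). exact hup. }
  assert (hu1 : u <= 1) by nra.
  assert (ln u <= 0) by (rewrite <- ln_1; apply ln_le; lra).
  unfold Gfun. apply exp_le.
  assert ((alpha - 2 * beta - 1 / 2) * ln u <= 0) by nra.
  pose proof (pow2_ge_0 u). lra.
Qed.

Lemma continuous_exp_Gfun alpha beta y u : 0 < u ->
  continuous (fun u => exp (Gfun alpha beta y u)) u.
Proof. intros hu. apply continuous_of_ex_derive. unfold Gfun. auto_derive. lra. Qed.

Section KummerComparison.

Variables alpha beta y : R.
Hypothesis halpha : 1 / 2 <= alpha <= 1.
Hypothesis hbeta : beta <= 0.
Hypothesis hy : y <= -1.

Lemma kummerM_eq_exp_mul : kummerM beta alpha y = exp y * kummerM (alpha - beta) alpha (- y).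
Proof.
  rewrite <- kummerM_transform by lra. f_equal. ring.
Qed.

Lemma is_RInt_0_oo_kummer_integrand_Gamma :
  is_RInt_0_oo (kummer_integrand (alpha - beta) alpha (- y))
    (Gamma (alpha - beta) * kummerM (alpha - beta) alpha (- y)).
Proof.
  destruct (ex_is_RInt_0_oo_gauss_pow (2 * (alpha - beta) - 1)) as [J HJ]; [lra|].
  rewrite (Gamma_gauss_pow _ J HJ).
  apply is_RInt_0_oo_kummer_integrand; [lra|lra|lra|exact HJ].
Qed.

Lemma ex_RInt_exp_Gfun A B : 0 < A -> A <= B ->
  ex_RInt (fun u => exp (Gfun alpha beta y u)) A B.
Proof.
  intros hA hAB. apply ex_RInt_continuous_R; [exact hAB|].
  intros u hu. apply continuous_exp_Gfun. lra.
Qed.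

Lemma RInt_exp_Gfun_le_Gamma_kummerM B : 1 / sqrt (- y) <= B ->
  RInt (fun u => exp (Gfun alpha beta y u)) (1 / sqrt (- y)) B <=
  / (kummer_lower_const alpha * Rpower (- y) ((1 - 2 * alpha) / 4)) *
  (Gamma (alpha - beta) * kummerM (alpha - beta) alpha (- y)).
Proof.
  intros hB. set (c := kummer_lower_const alpha * Rpower (- y) ((1 - 2 * alpha) / 4)).
  assert (hc : 0 < c).
  { apply Rmult_lt_0_compat; [apply kummer_lower_const_pos; lra|apply Rpower_pos]. }
  assert (hp : 0 < 1 / sqrt (- y)) by (apply Rdiv_lt_0_compat; [lra|apply sqrt_lt_R0; lra]).
  destruct is_RInt_0_oo_kummer_integrand_Gamma as [Hex [_ [Hub _]]].
  apply Rle_trans with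
    (RInt (fun u => / c * kummer_integrand (alpha - beta) alpha (- y) u) (1 / sqrt (- y)) B).
  - apply RInt_le; [exact hB|apply ex_RInt_exp_Gfun; lra|apply ex_RInt_scal_R, Hex; lra|].
    intros u hu. apply Rmult_le_reg_l with c; [exact hc|].
    rewrite <- Rmult_assoc, Rinv_r, Rmult_1_l by lra.
    apply exp_Gfun_le_kummer_integrand; lra.
  - rewrite RInt_scal_R by (apply Hex; lra).
    apply Rmult_le_compat_l; [left; apply Rinv_0_lt_compat, hc|apply Hub; lra].
Qed.

Lemma ex_is_RInt_p_oo_exp_Gfun :
  exists I, is_RInt_p_oo (1 / sqrt (- y)) (fun u => exp (Gfun alpha beta y u)) I.
Proof.
  assert (hp : 0 < 1 / sqrt (- y)) by (apply Rdiv_lt_0_compat; [lra|apply sqrt_lt_R0; lra]).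
  eapply is_RInt_p_oo_exists.
  - intros B hB. apply ex_RInt_exp_Gfun; lra.
  - intros u hu. left. apply exp_pos.
  - apply RInt_exp_Gfun_le_Gamma_kummerM.
Qed.

Lemma ex_is_RInt_0_oo_exp_Gfun : exists I, is_RInt_0_oo (fun u => exp (Gfun alpha beta y u)) I.
Proof.
  set (p := 1 / sqrt (- y)).
  assert (hp : 0 < p <= 1).
  { assert (1 <= sqrt (- y)) by (rewrite <- sqrt_1; apply sqrt_le_1; lra).
    unfold p. split; [apply Rdiv_lt_0_compat; lra|].
    unfold Rdiv. rewrite Rmult_1_l, <- Rinv_1. apply Rinv_le_contravar; lra. }
  apply (is_RInt_0_oo_exists _ (exp 2 +
    / (kummer_lower_const alpha * Rpower (- y) ((1 - 2 * alpha) / 4)) *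
    (Gamma (alpha - beta) * kummerM (alpha - beta) alpha (- y)))).
  - apply ex_RInt_exp_Gfun.
  - intros u hu. left. apply exp_pos.
  - intros A B hA hAB.
    pose proof (Rmin_l A p). pose proof (Rmin_r A p).
    pose proof (Rmax_l B p). pose proof (Rmax_r B p) as hpB'.
    set (A' := Rmin A p) in *. set (B' := Rmax B p) in *.
    assert (hA' : 0 < A') by (apply Rmin_glb_lt; lra).
    apply Rle_trans with (RInt (fun u => exp (Gfun alpha beta y u)) A' B').
    { apply RInt_le_of_subinterval; try lra; [intros; left; apply exp_pos|].
      apply ex_RInt_exp_Gfun; lra. }
    rewrite <- (RInt_Chasles_R _ A' p B') by (apply ex_RInt_exp_Gfun; lra).
    apply Rplus_le_compat; [|apply RInt_exp_Gfun_le_Gamma_kummerM; exact hpB'].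
    apply Rle_trans with (RInt (fun _ => exp 2) A' p).
    + apply RInt_le; [lra|apply ex_RInt_exp_Gfun; lra|apply ex_RInt_const_R|].
      intros u hu. apply exp_Gfun_le_exp_2; fold p; lra.
    + rewrite RInt_const_R. pose proof (exp_pos 2). nra.
Qed.

Lemma Gamma_mul_kummerM_le :
  Gamma (alpha - beta) * kummerM beta alpha y <=
  kummer_upper_const alpha * (exp y * Rpower (- y) ((1 - 2 * alpha) / 4)) *
  RInt_gen (fun u => exp (Gfun alpha beta y u)) (at_right 0) (Rbar_locally p_infty).
Proof.
  destruct ex_is_RInt_0_oo_exp_Gfun as [I HI]. rewrite (RInt_gen_0_oo _ _ HI).
  rewrite kummerM_eq_exp_mul.
  pose proof (is_RInt_0_oo_le _ _ _ _
    (kummer_upper_const alpha * Rpower (- y) ((1 - 2 * alpha) / 4))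
    ltac:(left; apply Rmult_lt_0_compat; [apply kummer_upper_const_pos|apply Rpower_pos])
    is_RInt_0_oo_kummer_integrand_Gamma HI
    ltac:(intros u hu; apply kummer_integrand_le_exp_Gfun; lra)).
  pose proof (exp_pos y). nra.
Qed.

Lemma RInt_gen_le_Gamma_mul_kummerM :
  kummer_lower_const alpha * (exp y * Rpower (- y) ((1 - 2 * alpha) / 4)) *
  RInt_gen (fun u => exp (Gfun alpha beta y u)) (at_point (1 / sqrt (- y))) (Rbar_locally p_infty)
  <= Gamma (alpha - beta) * kummerM beta alpha y.
Proof.
  destruct ex_is_RInt_p_oo_exp_Gfun as [I HI]. rewrite (RInt_gen_p_oo _ _ _ HI).
  rewrite kummerM_eq_exp_mul.
  set (c := kummer_lower_const alpha * Rpower (- y) ((1 - 2 * alpha) / 4)).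
  assert (hc : 0 < c).
  { apply Rmult_lt_0_compat; [apply kummer_lower_const_pos; lra|apply Rpower_pos]. }
  assert (hp : 0 < 1 / sqrt (- y)) by (apply Rdiv_lt_0_compat; [lra|apply sqrt_lt_R0; lra]).
  pose proof (is_RInt_p_oo_le_0_oo _ _ _ _ _ (/ c) hp ltac:(left; apply Rinv_0_lt_compat, hc)
    HI is_RInt_0_oo_kummer_integrand_Gamma) as H.
  assert (HcI : c * I <= Gamma (alpha - beta) * kummerM (alpha - beta) alpha (- y)).
  { apply Rmult_le_reg_l with (/ c); [apply Rinv_0_lt_compat, hc|].
    rewrite <- Rmult_assoc, Rinv_l, Rmult_1_l by lra.
    apply H. intros u hu. apply Rmult_le_reg_l with c; [exact hc|].
    rewrite <- Rmult_assoc, Rinv_r, Rmult_1_l by lra.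
    apply exp_Gfun_le_kummer_integrand; lra. }
  unfold c in HcI. pose proof (exp_pos y). nra.
Qed.

Lemma RInt_gen_exp_Gfun_ge0 :
  0 <= RInt_gen (fun u => exp (Gfun alpha beta y u)) (at_right 0) (Rbar_locally p_infty).
Proof.
  destruct ex_is_RInt_0_oo_exp_Gfun as [I HI].
  rewrite (RInt_gen_0_oo _ _ HI). exact (is_RInt_0_oo_ge0 _ _ HI).
Qed.

Lemma RInt_gen_p_exp_Gfun_ge0 :
  0 <= RInt_gen (fun u => exp (Gfun alpha beta y u))
         (at_point (1 / sqrt (- y))) (Rbar_locally p_infty).
Proof.
  destruct ex_is_RInt_p_oo_exp_Gfun as [I HI].
  rewrite (RInt_gen_p_oo _ _ _ HI). exact (is_RInt_p_oo_ge0 _ _ _ HI).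
Qed.

End KummerComparison.

Lemma one_sub_inv_INR_range n : (2 <= n)%nat -> 1 / 2 <= 1 - 1 / INR n <= 1.
Proof.
  intros hn.
  assert (hn2 : 2 <= INR n) by (replace 2 with (INR 2) by (simpl; ring); apply le_INR, hn).
  assert (0 < 1 / INR n <= 1 / 2); [|lra].
  split; [apply Rdiv_lt_0_compat; lra|].
  apply Rmult_le_compat_l; [lra|apply Rinv_le_contravar; lra].
Qed.

Lemma sandwich_div_Rmax g m X lo up c_lo c_up :
  0 < g -> 0 < X -> 0 < c_lo -> 0 < c_up -> 0 <= lo -> 0 <= up ->
  c_lo * X * lo <= g * m -> g * m <= c_up * X * up ->
  / Rmax c_up (/ c_lo) * (X / g) * lo <= m /\ m <= Rmax c_up (/ c_lo) * (X / g) * up.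
Proof.
  intros hg hX hlo hup hl hu Hlo Hup.
  pose proof (Rmax_l c_up (/ c_lo)). pose proof (Rmax_r c_up (/ c_lo)).
  assert (hC : / Rmax c_up (/ c_lo) <= c_lo).
  { rewrite <- (Rinv_inv c_lo) at 2.
    apply Rinv_le_contravar; [apply Rinv_0_lt_compat; lra|lra]. }
  split; apply Rmult_le_reg_l with g; try lra.
  - replace (g * (/ Rmax c_up (/ c_lo) * (X / g) * lo)) with (/ Rmax c_up (/ c_lo) * X * lo)
      by (field; lra).
    eapply Rle_trans; [|exact Hlo]. apply Rmult_le_compat_r; [lra|]. nra.
  - replace (g * (Rmax c_up (/ c_lo) * (X / g) * up)) with (Rmax c_up (/ c_lo) * X * up)
      by (field; lra).
    eapply Rle_trans; [exact Hup|]. apply Rmult_le_compat_r; [lra|]. nra.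
Qed.

Theorem lemma4p3 (n : nat) (hn : (2 <= n)%nat) :
  let alpha := 1 - 1 / INR n in
  exists C : R, 0 < C /\
    forall beta y : R, beta <= 0 -> y <= -1 ->
      / C * (exp y * Rpower (- y) ((1 - 2 * alpha) / 4) / Gamma (alpha - beta))
          * RInt_gen (fun u => exp (Gfun alpha beta y u))
              (at_point (1 / sqrt (- y))) (Rbar_locally p_infty)
        <= kummerM beta alpha y /\
      kummerM beta alpha y <=
        C * (exp y * Rpower (- y) ((1 - 2 * alpha) / 4) / Gamma (alpha - beta))
          * RInt_gen (fun u => exp (Gfun alpha beta y u))
              (at_right 0) (Rbar_locally p_infty).
Proof.
  intros alpha. pose proof (one_sub_inv_INR_range n hn) as halpha. fold alpha in halpha.
  pose proof (kummer_upper_const_pos alpha). pose proof (kummer_lower_const_pos alpha ltac:(lra)).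
  exists (Rmax (kummer_upper_const alpha) (/ kummer_lower_const alpha)).
  split; [pose proof (Rmax_l (kummer_upper_const alpha) (/ kummer_lower_const alpha)); lra|].
  intros beta y hbeta hy.
  apply sandwich_div_Rmax.
  - apply Gamma_pos. lra.
  - apply Rmult_lt_0_compat; [apply exp_pos|apply Rpower_pos].
  - assumption.
  - assumption.
  - apply RInt_gen_p_exp_Gfun_ge0; assumption.
  - apply RInt_gen_exp_Gfun_ge0; assumption.
  - apply RInt_gen_le_Gamma_mul_kummerM; assumption.
  - apply Gamma_mul_kummerM_le; assumption.
Qed.
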